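(* Let $T$ be a locally finite spherically symmetric tree rooted at $\rho$, with connective constant with respect to $\rho$ equal to $\Delta_\rho$, and let $\lambda>0$ satisfy $\lambda<\lambda_c(\Delta_\rho)$, where $\lambda_c(D)=\frac{D^D}{(D-1)^{D+1}}$. Then for any two boundary conditions $\sigma$ and $\tau$ on $T$ which differ only at depth at least $\ell$ in $T$, $$|R_\rho(\sigma,T)-R_\rho(\tau,T)|=\exp(-\Omega(\ell)).$$
   Context: A rooted tree is spherically symmetric if the degree of each vertex depends only on its distance from the root. If $d_i$ is the arity (number of children) of vertices at distance $i$ from $\rho$, then $N(\rho,\ell)=\prod_{i=0}^{\ell-1}d_i$ and $\Delta_\rho=\limsup_{\ell\to\infty}N(\rho,\ell)^{1/\ell}$. Hard core model with activity $\lambda$: independent sets $I$ weighted by $\lambda^{|I|}$; a boundary condition fixes the states (occupied/unoccupied) of some vertices consistently with an independent set; $R_\rho(\sigma,T)=p/(1-p)$ where $p$ is the probability that $\rho$ is occupied under the hard core distribution conditioned on $\sigma$. *)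

From Stdlib Require Import Reals Lra List Arith Bool.
From Coquelicot Require Import Coquelicot.
Import ListNotations.
Open Scope R_scope.
Open Scope bool_scope.
Open Scope R_scope.

(** Spherically symmetric tree with arity sequence [d] (locally finite:
    each [d i] is a natural number).  A vertex at depth [k] is the list
    [c_0; ...; c_{k-1}] of child indices with [c_i < d i]; the root [rho]
    is [nil]; the children of [v] are [v ++ [c]] for [c < d (length v)]. *)

Fixpoint level (d : nat -> nat) (k : nat) : list (list nat) :=
  match k with
  | O => [ [] ]
  | S k' => flat_map (fun v => map (fun c => v ++ [c]) (seq 0 (d k')))
                     (level d k')
  end.

Definition verts (d : nat -> nat) (L : nat) : list (list nat) :=
  flat_map (level d) (seq 0 (S L)).

Definition Nlev (d : nat -> nat) (l : nat) : R :=
  fold_right Rmult 1 (map (fun i => INR (d i)) (seq 0 l)).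

Definition root_l (x : R) (l : nat) : R :=
  if Req_EM_T x 0 then 0 else Rpower x (/ INR l).

Definition conn_const (d : nat -> nat) : Rbar :=
  LimSup_seq (fun l => root_l (Nlev d l) l).

(** lambda_c(D) = D^D/(D-1)^(D+1), with the usual conventions
    lambda_c(D) = +oo for D <= 1 and lambda_c(+oo) = 0. *)
Definition lambda_c (D : Rbar) : Rbar :=
  match D with
  | Finite x => if Rle_dec x 1 then p_infty
                else Finite (Rpower x x / Rpower (x - 1) (x + 1))
  | p_infty => Finite 0
  | m_infty => p_infty
  end.

Definition list_eqb (u v : list nat) : bool :=
  if list_eq_dec Nat.eq_dec u v then true else false.

Definition memb (v : list nat) (S : list (list nat)) : bool :=
  existsb (fun w => list_eqb w v) S.

Definition childb (u v : list nat) : bool :=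
  Nat.eqb (length v) (S (length u)) && list_eqb (firstn (length u) v) u.

Definition adjb (u v : list nat) : bool := childb u v || childb v u.

Definition indepb (S : list (list nat)) : bool :=
  forallb (fun u => forallb (fun v => negb (adjb u v)) S) S.

Fixpoint subsets {A : Type} (l : list A) : list (list A) :=
  match l with
  | [] => [ [] ]
  | x :: t => let r := subsets t in r ++ map (cons x) r
  end.

(** boundary condition: [Some true] = fixed occupied, [Some false] = fixed
    unoccupied, [None] = free. *)
Definition bcond := list nat -> option bool.

Definition consistentb (d : nat -> nat) (L : nat) (sigma : bcond)
  (S : list (list nat)) : bool :=
  forallb (fun v => match sigma v with
                    | Some true => memb v S
                    | Some false => negb (memb v S)
                    | None => true
                    end) (verts d L).

Definition boundary_ok (d : nat -> nat) (L : nat) (sigma : bcond) : Prop :=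
  indepb (filter (fun v => match sigma v with Some true => true | _ => false end)
                 (verts d L)) = true.

Definition Zpart (d : nat -> nat) (lam : R) (L : nat) (sigma : bcond)
  (P : list (list nat) -> bool) : R :=
  fold_right Rplus 0
    (map (fun I => lam ^ length I)
       (filter (fun I => indepb I && consistentb d L sigma I && P I)
          (subsets (verts d L)))).

Definition prob_root (d : nat -> nat) (lam : R) (L : nat) (sigma : bcond) : R :=
  Zpart d lam L sigma (memb []) / Zpart d lam L sigma (fun _ => true).

Definition Rratio (d : nat -> nat) (lam : R) (L : nat) (sigma : bcond) : R :=
  let p := prob_root d lam L sigma in p / (1 - p).

From Stdlib Require Import Reals Lra Lia List Bool FunctionalExtensionality.
From Coquelicot Require Import Coquelicot.
Import ListNotations.
Open Scope R_scope.

(* Summing out the vertices of the deepest level one level at a time turns the partition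
   functions into the tree recursion [p_v = 1 / (1 + x_v)], [x_v = lam * prod_c p_c], where
   [p_v] is the probability that [v] is unoccupied.  For the potential
   [m_v = arcsinh (sqrt x_v)] the recursion reads
   [m_v = arcsinh (sqrt lam * exp (- sum_c ln (cosh m_c)))], and the mean value theorem
   followed by Hölder's inequality gives [|dm_v|^q <= gam * sum_c |dm_c|^q] for some [q > 1]
   and a [gam] with [gam * D < 1] as soon as [lam < lambda_c(D)]; the bound on [gam] comes
   from tangent lines to two concave functions of the logarithms of [2 ln (cosh m_c)] and
   of their sum.  Iterating down to the depth [l] where [sigma] and [tau] start to differ
   bounds [|dm_root|^q] by [gam^l N(rho, l)] times a constant, and [N(rho, l) <= C D'^l]
   with [gam * D' < 1] for any [D'] strictly above the connective constant. *)

Notation sumR := (fold_right Rplus 0).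
Notation prodR := (fold_right Rmult 1).

Definition indR (b : bool) : R := if b then 1 else 0.

Lemma indR_and a b : indR (a && b) = indR a * indR b.
Proof. destruct a, b; unfold indR; simpl; ring. Qed.

Lemma sumR_app l1 l2 : sumR (l1 ++ l2) = sumR l1 + sumR l2.
Proof. induction l1; simpl; [ring | rewrite IHl1; ring]. Qed.

Lemma prodR_app l1 l2 : prodR (l1 ++ l2) = prodR l1 * prodR l2.
Proof. induction l1; simpl; [ring | rewrite IHl1; ring]. Qed.

Lemma sumR_scal {X} (l : list X) c f :
  sumR (map (fun x => c * f x) l) = c * sumR (map f l).
Proof. induction l; simpl; [ring | rewrite IHl; ring]. Qed.

Lemma sumR_plus {X} (l : list X) f g :
  sumR (map (fun x => f x + g x) l) = sumR (map f l) + sumR (map g l).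
Proof. induction l; simpl; [ring | rewrite IHl; ring]. Qed.

Lemma sumR_filter {X} (l : list X) p g :
  sumR (map g (filter p l)) = sumR (map (fun x => indR (p x) * g x) l).
Proof.
  induction l; simpl; auto.
  destruct (p a); simpl; rewrite IHl; unfold indR; ring.
Qed.

Lemma sumR_nonneg {X} (l : list X) f :
  (forall x, In x l -> 0 <= f x) -> 0 <= sumR (map f l).
Proof. induction l; simpl; intros H; [lra|]. pose proof (H a (or_introl eq_refl)). pose proof (IHl (fun x h => H x (or_intror h))). lra. Qed.

Lemma sumR_le {X} (l : list X) f g :
  (forall x, In x l -> f x <= g x) -> sumR (map f l) <= sumR (map g l).
Proof. induction l; simpl; intros H; [lra|]. pose proof (H a (or_introl eq_refl)). pose proof (IHl (fun x h => H x (or_intror h))). lra. Qed.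

Lemma sumR_le_in {X} (l : list X) f x :
  (forall y, In y l -> 0 <= f y) -> In x l -> f x <= sumR (map f l).
Proof.
  induction l as [|a l IH]; simpl; intros H Hx; [destruct Hx|].
  pose proof (H a (or_introl eq_refl)). pose proof (sumR_nonneg l f (fun y h => H y (or_intror h))).
  destruct Hx as [<-|Hx]; [lra|]. pose proof (IH (fun y h => H y (or_intror h)) Hx). lra.
Qed.

Lemma sumR_eq0 {X} (l : list X) f :
  (forall x, In x l -> 0 <= f x) -> sumR (map f l) = 0 -> forall x, In x l -> f x = 0.
Proof.
  intros H E x Hx. pose proof (sumR_le_in l f x H Hx). pose proof (H x Hx). lra.
Qed.

Lemma sumR_le_length {X} (l : list X) f B :
  (forall x, In x l -> f x <= B) -> sumR (map f l) <= INR (length l) * B.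
Proof.
  induction l; cbn [length map fold_right]; intros H; [simpl; lra|]. rewrite S_INR.
  pose proof (H a (or_introl eq_refl)). pose proof (IHl (fun x h => H x (or_intror h))). lra.
Qed.

Lemma Rabs_sumR_le {X} (l : list X) f g :
  (forall x, In x l -> Rabs (f x) <= g x) -> Rabs (sumR (map f l)) <= sumR (map g l).
Proof.
  induction l; simpl; intros H; [rewrite Rabs_R0; lra|].
  eapply Rle_trans; [apply Rabs_triang | apply Rplus_le_compat; auto].
Qed.

Lemma sumR_const0 {X} (l : list X) : sumR (map (fun _ => 0) l) = 0.
Proof. induction l; simpl; auto. rewrite IHl; ring. Qed.

Lemma prodR_const1 {X} (l : list X) : prodR (map (fun _ => 1) l) = 1.
Proof. induction l; simpl; auto. rewrite IHl; ring. Qed.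

Lemma prodR_mul4 {X} (l : list X) f g h k :
  prodR (map (fun x => f x * g x * h x * k x) l) =
  prodR (map f l) * prodR (map g l) * prodR (map h l) * prodR (map k l).
Proof. induction l; simpl; [ring | rewrite IHl; ring]. Qed.

Lemma prodR_flat_map {X Y} (l : list X) (h : X -> list Y) g :
  prodR (map g (flat_map h l)) = prodR (map (fun x => prodR (map g (h x))) l).
Proof. induction l; simpl; auto. rewrite map_app, prodR_app, IHl. reflexivity. Qed.

Lemma indR_forallb {X} (f : X -> bool) l :
  indR (forallb f l) = prodR (map (fun x => indR (f x)) l).
Proof. induction l; simpl; [reflexivity|]. rewrite indR_and, IHl. reflexivity. Qed.

Lemma prodR_pos {X} (l : list X) f : (forall x, In x l -> 0 < f x) -> 0 < prodR (map f l).
Proof. induction l; simpl; intros H; [lra|]. apply Rmult_lt_0_compat; auto. Qed.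

Lemma prodR_nonneg {X} (l : list X) f : (forall x, In x l -> 0 <= f x) -> 0 <= prodR (map f l).
Proof. induction l; simpl; intros H; [lra|]. apply Rmult_le_pos; auto. Qed.

Lemma prodR_le1 {X} (l : list X) f :
  (forall x, In x l -> 0 <= f x <= 1) -> prodR (map f l) <= 1.
Proof.
  induction l; simpl; intros H; [lra|].
  pose proof (H a (or_introl eq_refl)). pose proof (IHl (fun x h => H x (or_intror h))).
  pose proof (prodR_nonneg l f (fun x h => proj1 (H x (or_intror h)))). nra.
Qed.

Lemma prodR_div {X} (l : list X) f g : (forall x, In x l -> 0 < g x) ->
  prodR (map (fun x => f x / g x) l) = prodR (map f l) / prodR (map g l).
Proof.
  intros H. assert (0 < prodR (map g l)) by (apply prodR_pos; auto).
  revert H0. induction l; simpl; intros Hg; [field|].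
  pose proof (H a (or_introl eq_refl)).
  assert (0 < prodR (map g l)) by (apply prodR_pos; intros; apply H; simpl; auto).
  rewrite IHl by (auto; intros; apply H; simpl; auto). field. lra.
Qed.

Lemma prodR_filter {X} (l : list X) f p : (forall x, In x l -> p x = false -> f x = 1) ->
  prodR (map f l) = prodR (map f (filter p l)).
Proof.
  induction l; simpl; intros H; auto.
  destruct (p a) eqn:E; simpl; rewrite IHl by auto; auto. rewrite H; auto. ring.
Qed.

Lemma prodR_exp {X} (l : list X) g : prodR (map (fun x => exp (g x)) l) = exp (sumR (map g l)).
Proof. induction l; simpl; [rewrite exp_0; auto|]. rewrite IHl, exp_plus. auto. Qed.

Lemma prodR_eq0 {X} (l : list X) f x : In x l -> f x = 0 -> prodR (map f l) = 0.
Proof.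
  induction l; simpl; intros H E; [destruct H|].
  destruct H as [<-|H]; [rewrite E; ring | rewrite IHl; auto; ring].
Qed.
Lemma in_subsets_incl {X} (W : list X) I : In I (subsets W) -> forall x, In x I -> In x W.
Proof.
  revert I; induction W as [|y W IH]; simpl; intros I HI x Hx.
  - destruct HI as [<-|[]]. destruct Hx.
  - apply in_app_or in HI. destruct HI as [HI|HI].
    + right. eauto.
    + apply in_map_iff in HI. destruct HI as [J [<- HJ]].
      destruct Hx as [->|Hx]; [left; auto | right; eauto].
Qed.

Lemma sumR_subsets_app {X} (V W : list X) (f : list X -> R) :
  sumR (map f (subsets (V ++ W))) =
  sumR (map (fun I1 => sumR (map (fun I2 => f (I1 ++ I2)) (subsets W))) (subsets V)).
Proof.
  revert f; induction V as [|x V IH]; intro f; simpl.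
  - rewrite Rplus_0_r. reflexivity.
  - rewrite !map_app, !sumR_app, !map_map, IH, IH. reflexivity.
Qed.

Lemma list_eqb_true u v : list_eqb u v = true <-> u = v.
Proof. unfold list_eqb. destruct (list_eq_dec Nat.eq_dec u v); split; congruence. Qed.

Lemma list_eqb_false u v : u <> v -> list_eqb u v = false.
Proof. unfold list_eqb. destruct (list_eq_dec Nat.eq_dec u v); congruence. Qed.

Lemma membP v S : memb v S = true <-> In v S.
Proof.
  unfold memb. rewrite existsb_exists. split.
  - intros [w [Hw E]]. apply list_eqb_true in E. subst w. auto.
  - intro H. exists v. split; auto. apply list_eqb_true. auto.
Qed.

Lemma memb_false v S : ~ In v S -> memb v S = false.
Proof. intro H. destruct (memb v S) eqn:E; auto. apply membP in E. contradiction. Qed.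

Lemma memb_app v S T : memb v (S ++ T) = memb v S || memb v T.
Proof. unfold memb. apply existsb_app. Qed.

Lemma memb_cons_neq v x S : x <> v -> memb v (x :: S) = memb v S.
Proof. intro H. unfold memb. simpl. rewrite list_eqb_false; auto. Qed.

Lemma memb_cons_self x S : memb x (x :: S) = true.
Proof. apply membP. left; auto. Qed.

Lemma sumR_subsets_prod (W : list (list nat)) (h : list nat -> bool -> R) :
  NoDup W ->
  sumR (map (fun I => prodR (map (fun u => h u (memb u I)) W)) (subsets W)) =
  prodR (map (fun u => h u false + h u true) W).
Proof.
  induction W as [|x W IH]; intro ND; simpl; [ring|].
  inversion ND as [|? ? Hx ND']; subst.
  rewrite map_app, sumR_app, map_map.
  assert (E1 : forall I, In I (subsets W) -> memb x I = false).
  { intros I HI. apply memb_false. intro H. apply Hx. eapply in_subsets_incl; eauto. }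
  rewrite (map_ext_in _ (fun I => h x false * prodR (map (fun u => h u (memb u I)) W))).
  2:{ intros I HI. simpl. rewrite E1; auto. }
  rewrite (map_ext_in (fun x0 => prodR (map (fun u => h u (memb u (x :: x0))) (x :: W)))
             (fun I => h x true * prodR (map (fun u => h u (memb u I)) W))).
  2:{ intros I HI. cbn [map fold_right]. rewrite memb_cons_self.
      f_equal. f_equal. apply map_ext_in. intros u Hu. rewrite memb_cons_neq; auto.
      intro; subst; contradiction. }
  rewrite !sumR_scal, IH by auto. ring.
Qed.

Lemma pow_length_subset (W : list (list nat)) I lam :
  NoDup W -> In I (subsets W) ->
  lam ^ length I = prodR (map (fun u => if memb u I then lam else 1) W).
Proof.
  revert I; induction W as [|x W IH]; intros I ND HI; cbn [subsets map fold_right] in *.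
  - destruct HI as [<-|[]]. reflexivity.
  - inversion ND as [|? ? Hx ND']; subst.
    apply in_app_or in HI. destruct HI as [HI|HI].
    + rewrite (memb_false x I). 2:{ intro H. apply Hx. eapply in_subsets_incl; eauto. }
      rewrite (IH I); auto. ring.
    + apply in_map_iff in HI. destruct HI as [J [<- HJ]].
      rewrite memb_cons_self. cbn [length pow].
      rewrite (IH J); auto. f_equal. f_equal. apply map_ext_in. intros u Hu.
      rewrite memb_cons_neq; auto. intro; subst; contradiction.
Qed.

Lemma forallb_ext_in {X} (f g : X -> bool) l :
  (forall x, In x l -> f x = g x) -> forallb f l = forallb g l.
Proof. induction l; simpl; intros H; auto. rewrite H, IHl; auto. Qed.

Lemma NoDup_flat_map_disjoint {X Y} (f : X -> list Y) l :
  NoDup l -> (forall x, In x l -> NoDup (f x)) ->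
  (forall x y z, In x l -> In y l -> In z (f x) -> In z (f y) -> x = y) ->
  NoDup (flat_map f l).
Proof.
  induction l as [|a l IH]; simpl; intros ND H1 H2; [constructor|].
  inversion ND; subst. apply NoDup_app; auto.
  { apply IH; auto. intros x y z Hx Hy. apply H2; auto. }
  intros z Hz Hz'. apply in_flat_map in Hz'. destruct Hz' as [y [Hy Hzy]].
  assert (a = y) by (apply (H2 a y z); auto). subst. contradiction.
Qed.

Lemma level_length d k v : In v (level d k) -> length v = k.
Proof.
  revert v; induction k; simpl; intros v H.
  - destruct H as [<-|[]]; auto.
  - apply in_flat_map in H. destruct H as [w [Hw Hv]]. apply in_map_iff in Hv.
    destruct Hv as [c [<- _]]. rewrite length_app. simpl. rewrite (IHk w Hw). lia.
Qed.

Lemma level_S_child d k v c : In v (level d k) -> (c < d k)%nat -> In (v ++ [c]) (level d (S k)).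
Proof.
  intros Hv Hc. simpl. apply in_flat_map. exists v. split; auto.
  apply in_map_iff. exists c. split; [reflexivity | apply in_seq; lia].
Qed.

Lemma level_S_inv d k u : In u (level d (S k)) ->
  exists v c, u = v ++ [c] /\ In v (level d k) /\ (c < d k)%nat.
Proof.
  simpl. intro H. apply in_flat_map in H. destruct H as [v [Hv Hu]].
  apply in_map_iff in Hu. destruct Hu as [c [<- Hc]]. apply in_seq in Hc.
  exists v, c. repeat split; auto. lia.
Qed.

Lemma NoDup_level d k : NoDup (level d k).
Proof.
  induction k; simpl; [repeat constructor; intros []|].
  apply NoDup_flat_map_disjoint; auto.
  - intros v _. apply NoDup_map_NoDup_ForallPairs; [|apply seq_NoDup].
    intros x y _ _ E. apply app_inj_tail in E. destruct E; auto.
  - intros x y z _ _ Hx Hy. apply in_map_iff in Hx, Hy.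
    destruct Hx as [c [<- _]]. destruct Hy as [c' [E _]].
    apply app_inj_tail in E. destruct E; auto.
Qed.

Lemma verts_S d L : verts d (S L) = verts d L ++ level d (S L).
Proof. unfold verts. rewrite seq_S, flat_map_app. simpl. rewrite app_nil_r. reflexivity. Qed.

Lemma verts_length d L v : In v (verts d L) -> (length v <= L)%nat.
Proof.
  unfold verts. intro H. apply in_flat_map in H. destruct H as [k [Hk Hv]].
  apply in_seq in Hk. apply level_length in Hv. lia.
Qed.

Lemma level_in_verts d L k v : (k <= L)%nat -> In v (level d k) -> In v (verts d L).
Proof. intros Hk Hv. unfold verts. apply in_flat_map. exists k. split; auto. apply in_seq. lia. Qed.

Lemma childb_spec u v : childb u v = true <-> length v = S (length u) /\ firstn (length u) v = u.
Proof. unfold childb. rewrite andb_true_iff, Nat.eqb_eq, list_eqb_true. tauto. Qed.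

Lemma childb_app1 w c : childb w (w ++ [c]) = true.
Proof.
  apply childb_spec. rewrite length_app. simpl. split; [lia|].
  rewrite firstn_app, Nat.sub_diag, firstn_all. simpl. apply app_nil_r.
Qed.

Lemma adjb_same_length u v : length u = length v -> adjb u v = false.
Proof.
  intro E. unfold adjb.
  destruct (childb u v) eqn:E1; [apply childb_spec in E1; lia|].
  destruct (childb v u) eqn:E2; [apply childb_spec in E2; lia|]. reflexivity.
Qed.

Lemma adjb_across_level d L x w c : (length x <= L)%nat -> In (w ++ [c]) (level d (S L)) ->
  adjb x (w ++ [c]) = list_eqb x w /\ adjb (w ++ [c]) x = list_eqb x w.
Proof.
  intros Lx Wy. pose proof (level_length _ _ _ Wy) as Ly.
  rewrite length_app in Ly. simpl in Ly.
  assert (cyx : childb (w ++ [c]) x = false).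
  { destruct (childb (w ++ [c]) x) eqn:E; auto. apply childb_spec in E. rewrite length_app in E. simpl in E. lia. }
  assert (cxy : childb x (w ++ [c]) = list_eqb x w).
  { destruct (list_eqb x w) eqn:Exw.
    - apply list_eqb_true in Exw. subst. apply childb_app1.
    - destruct (childb x (w ++ [c])) eqn:E; auto. apply childb_spec in E. destruct E as [E1 E2].
      rewrite length_app in E1. simpl in E1. assert (length x = length w) as Hl by lia.
      rewrite firstn_app, Hl, Nat.sub_diag, firstn_all in E2. simpl in E2. rewrite app_nil_r in E2.
      rewrite (proj2 (list_eqb_true x w) (eq_sym E2)) in Exw. discriminate. }
  unfold adjb. rewrite cyx, cxy, orb_false_r. auto.
Qed.

Lemma indepb_spec S : indepb S = true <-> forall u v, In u S -> In v S -> adjb u v = false.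
Proof.
  unfold indepb. rewrite forallb_forall. split.
  - intros H u v Hu Hv. specialize (H u Hu). rewrite forallb_forall in H.
    specialize (H v Hv). apply negb_true_iff in H. auto.
  - intros H u Hu. apply forallb_forall. intros v Hv. apply negb_true_iff. auto.
Qed.

Lemma indepb_app_level d L I1 I2 :
  (forall x, In x I1 -> In x (verts d L)) ->
  (forall x, In x I2 -> In x (level d (S L))) ->
  indepb (I1 ++ I2) = indepb I1 &&
     forallb (fun u => negb (memb (removelast u) I1 && memb u I2)) (level d (S L)).
Proof.
  intros H1 H2. apply eq_true_iff_eq. rewrite andb_true_iff, !indepb_spec, forallb_forall.
  split.
  - intros H. split; [intros u v Hu Hv; apply H; apply in_or_app; auto|].
    intros u Hu. apply negb_true_iff. destruct (memb (removelast u) I1) eqn:E1; auto.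
    destruct (memb u I2) eqn:E2; auto. apply membP in E1, E2.
    destruct (level_S_inv _ _ _ Hu) as [w [c [-> _]]]. rewrite removelast_last in E1.
    specialize (H w (w ++ [c])). unfold adjb in H. rewrite childb_app1 in H.
    simpl in H. rewrite H in *; auto; apply in_or_app; auto.
  - intros [HA HB] u v Hu Hv.
    assert (key : forall x y, In x I1 -> In y I2 -> adjb x y = false /\ adjb y x = false).
    { intros x y Hx Hy. destruct (level_S_inv _ _ _ (H2 y Hy)) as [w [c [-> _]]].
      destruct (adjb_across_level d L x w c) as [-> ->]; auto.
      - apply (verts_length d), H1; auto.
      - destruct (list_eqb x w) eqn:E; auto. apply list_eqb_true in E. subst w.
        specialize (HB (x ++ [c]) (H2 _ Hy)). rewrite removelast_last in HB.
        rewrite (proj2 (membP _ _) Hx), (proj2 (membP _ _) Hy) in HB. discriminate. }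
    apply in_app_or in Hu, Hv. destruct Hu as [Hu|Hu], Hv as [Hv|Hv].
    + apply HA; auto.
    + apply (proj1 (key u v Hu Hv)).
    + apply (proj2 (key v u Hv Hu)).
    + apply adjb_same_length.
      rewrite (level_length _ _ _ (H2 u Hu)), (level_length _ _ _ (H2 v Hv)). reflexivity.
Qed.
Definition consistent_at (sigma : bcond) (v : list nat) (b : bool) : bool :=
  match sigma v with Some true => b | Some false => negb b | None => true end.

Definition Zweighted (d : nat -> nat) (lam : R) (sigma : bcond) (L : nat)
  (A : list nat -> bool -> R) (Pb : bool -> bool) : R :=
  sumR (map (fun I => indR (indepb I) * indR (consistentb d L sigma I) * indR (Pb (memb [] I))
     * lam ^ length I * prodR (map (fun v => A v (memb v I)) (level d L))) (subsets (verts d L))).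

Definition weight1 : list nat -> bool -> R := fun _ _ => 1.

Lemma Zpart_Zweighted d lam L sigma Pb :
  Zpart d lam L sigma (fun I => Pb (memb [] I)) = Zweighted d lam sigma L weight1 Pb.
Proof.
  unfold Zpart, Zweighted. rewrite sumR_filter. f_equal. apply map_ext. intro I.
  rewrite !indR_and. unfold weight1. rewrite prodR_const1. ring.
Qed.

Lemma consistentb_app_level d L sigma I1 I2 :
  (forall x, In x I1 -> In x (verts d L)) ->
  (forall x, In x I2 -> In x (level d (S L))) ->
  consistentb d (S L) sigma (I1 ++ I2) = consistentb d L sigma I1 &&
     forallb (fun u => consistent_at sigma u (memb u I2)) (level d (S L)).
Proof.
  intros H1 H2. unfold consistentb. rewrite verts_S, forallb_app. f_equal.
  - apply forallb_ext_in. intros v Hv. rewrite memb_app.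
    rewrite (memb_false v I2). rewrite orb_false_r. reflexivity.
    intro H. apply H2 in H. apply level_length in H. apply verts_length in Hv. lia.
  - apply forallb_ext_in. intros v Hv. rewrite memb_app.
    rewrite (memb_false v I1). reflexivity.
    intro H. apply H1 in H. apply verts_length in H. apply level_length in Hv. lia.
Qed.

Definition child_weight (lam : R) (sigma : bcond) (A : list nat -> bool -> R)
  (u : list nat) (b' b : bool) : R :=
  indR (negb (b && b')) * indR (consistent_at sigma u b') * (if b' then lam else 1) * A u b'.

Definition peel_weight (d : nat -> nat) (lam : R) (sigma : bcond) (A : list nat -> bool -> R)
  (v : list nat) (b : bool) : R :=
  prodR (map (fun c => child_weight lam sigma A (v ++ [c]) false b + child_weight lam sigma A (v ++ [c]) true b)
    (seq 0 (d (length v)))).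

Lemma Zweighted_S d lam sigma L A Pb :
  Zweighted d lam sigma (S L) A Pb = Zweighted d lam sigma L (peel_weight d lam sigma A) Pb.
Proof.
  unfold Zweighted. rewrite verts_S, sumR_subsets_app. f_equal. apply map_ext_in. intros I1 HI1.
  set (W := level d (S L)).
  assert (H1 : forall x, In x I1 -> In x (verts d L)) by (apply in_subsets_incl; auto).
  rewrite (map_ext_in _ (fun I2 => (indR (indepb I1) * indR (consistentb d L sigma I1) *
        indR (Pb (memb [] I1)) * lam ^ length I1) *
        prodR (map (fun u => child_weight lam sigma A u (memb u I2) (memb (removelast u) I1)) W))).
  2:{ intros I2 HI2. assert (H2 : forall x, In x I2 -> In x W) by (apply in_subsets_incl; auto).
      rewrite (indepb_app_level d L I1 I2), (consistentb_app_level d L sigma I1 I2) by auto.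
      rewrite memb_app, (memb_false [] I2).
      2:{ intro H. apply H2 in H. apply level_length in H. simpl in H. lia. }
      rewrite orb_false_r, length_app, pow_add, (pow_length_subset W I2) by (auto; apply NoDup_level).
      rewrite !indR_and, !indR_forallb.
      unfold child_weight. rewrite prodR_mul4.
      rewrite (map_ext_in (fun v => A v (memb v (I1 ++ I2))) (fun u => A u (memb u I2))).
      2:{ intros u Hu. rewrite memb_app, memb_false. reflexivity.
          intro H. apply H1 in H. apply verts_length in H. apply level_length in Hu. lia. }
      unfold W. ring. }
  rewrite sumR_scal.
  pose proof (sumR_subsets_prod W (fun u b => child_weight lam sigma A u b (memb (removelast u) I1)) (NoDup_level d (S L))) as E.
  cbv beta in E. rewrite E. f_equal.
  unfold W. simpl level at 1. rewrite prodR_flat_map. f_equal. apply map_ext_in. intros v Hv.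
  unfold peel_weight. rewrite map_map, (level_length _ _ _ Hv). f_equal. apply map_ext. intro c.
  rewrite removelast_last. reflexivity.
Qed.

Fixpoint Tweight (d : nat -> nat) (lam : R) (sigma : bcond) (A : list nat -> bool -> R)
  (n : nat) (v : list nat) (b : bool) : R :=
  match n with
  | O => A v b
  | S n' => prodR (map (fun c => child_weight lam sigma (Tweight d lam sigma A n') (v ++ [c]) false b
                                 + child_weight lam sigma (Tweight d lam sigma A n') (v ++ [c]) true b)
                      (seq 0 (d (length v))))
  end.

Lemma Tweight_peel d lam sigma A n :
  Tweight d lam sigma (peel_weight d lam sigma A) n = Tweight d lam sigma A (S n).
Proof.
  induction n; simpl. reflexivity.
  apply functional_extensionality; intro v. apply functional_extensionality; intro b.
  rewrite IHn. reflexivity.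
Qed.

Lemma Zweighted_add d lam sigma k n A Pb :
  Zweighted d lam sigma (k + n) A Pb = Zweighted d lam sigma k (Tweight d lam sigma A n) Pb.
Proof.
  revert A; induction n; intro A.
  - rewrite Nat.add_0_r. reflexivity.
  - rewrite Nat.add_succ_r, Zweighted_S, IHn, Tweight_peel. reflexivity.
Qed.

Lemma Zweighted_0 d lam sigma A Pb :
  Zweighted d lam sigma 0 A Pb =
  indR (consistent_at sigma [] false) * indR (Pb false) * A [] false
  + indR (consistent_at sigma [] true) * indR (Pb true) * lam * A [] true.
Proof.
  unfold Zweighted, consistentb, verts. simpl. unfold indR, consistent_at. simpl.
  destruct (sigma []) as [[|]|]; destruct (Pb false), (Pb true); simpl; ring.
Qed.

Definition p_unocc_leaf (lam : R) (sigma : bcond) (v : list nat) : R :=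
  match sigma v with Some true => 0 | Some false => 1 | None => 1 / (1 + lam) end.

Fixpoint p_unocc (d : nat -> nat) (lam : R) (sigma : bcond) (n : nat) (v : list nat) : R :=
  match n with
  | O => p_unocc_leaf lam sigma v
  | S n' => match sigma v with
            | Some true => 0
            | Some false => 1
            | None => 1 / (1 + lam * prodR (map (fun c => p_unocc d lam sigma n' (v ++ [c]))
                                                 (seq 0 (d (length v)))))
            end
  end.

Definition Zunocc (d : nat -> nat) (lam : R) (sigma : bcond) (n : nat) (v : list nat) : R :=
  indR (consistent_at sigma v false) * Tweight d lam sigma weight1 n v false.
Definition Zocc (d : nat -> nat) (lam : R) (sigma : bcond) (n : nat) (v : list nat) : R :=
  indR (consistent_at sigma v true) * lam * Tweight d lam sigma weight1 n v true.

Lemma Tweight1_S_false d lam sigma n v :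
  Tweight d lam sigma weight1 (S n) v false =
  prodR (map (fun c => Zunocc d lam sigma n (v ++ [c]) + Zocc d lam sigma n (v ++ [c])) (seq 0 (d (length v)))).
Proof. simpl. f_equal. apply map_ext. intro c. unfold child_weight, Zunocc, Zocc, indR. simpl. ring. Qed.

Lemma Tweight1_S_true d lam sigma n v :
  Tweight d lam sigma weight1 (S n) v true =
  prodR (map (fun c => Zunocc d lam sigma n (v ++ [c])) (seq 0 (d (length v)))).
Proof. simpl. f_equal. apply map_ext. intro c. unfold child_weight, Zunocc, Zocc, indR. simpl. ring. Qed.

Lemma boundary_ok_nonadj d L sigma u v :
  boundary_ok d L sigma -> In u (verts d L) -> In v (verts d L) ->
  sigma u = Some true -> sigma v = Some true -> adjb u v = false.
Proof.
  unfold boundary_ok. intros H Hu Hv Su Sv. apply indepb_spec with (u := u) (v := v) in H; auto.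
  - apply filter_In. rewrite Su. auto.
  - apply filter_In. rewrite Sv. auto.
Qed.

Lemma boundary_ok_child d L sigma k v c : boundary_ok d L sigma ->
  In v (level d k) -> (k < L)%nat -> (c < d k)%nat ->
  sigma v = Some true -> sigma (v ++ [c]) <> Some true.
Proof.
  intros Hb Hv Hk Hc Sv Sc.
  assert (adjb v (v ++ [c]) = false).
  { apply (boundary_ok_nonadj d L sigma); auto.
    - apply (level_in_verts d L k); auto. lia.
    - apply (level_in_verts d L (S k)); [lia | apply level_S_child; auto]. }
  unfold adjb in H. rewrite childb_app1 in H. discriminate.
Qed.

Lemma p_unocc_ratio d lam L sigma : 0 < lam -> boundary_ok d L sigma ->
  forall n k v, In v (level d k) -> (k + n = L)%nat ->
  0 <= Zunocc d lam sigma n v /\ 0 <= Zocc d lam sigma n v /\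
  0 < Zunocc d lam sigma n v + Zocc d lam sigma n v /\
  (sigma v <> Some true -> 0 < Zunocc d lam sigma n v) /\
  p_unocc d lam sigma n v = Zunocc d lam sigma n v / (Zunocc d lam sigma n v + Zocc d lam sigma n v).
Proof.
  intros Hl Hb. induction n; intros k v Hv Hk.
  - unfold Zunocc, Zocc, consistent_at, indR. simpl. unfold weight1, p_unocc_leaf.
    destruct (sigma v) as [[|]|]; simpl; repeat split; try intro; try lra;
      try congruence; field; lra.
  - assert (Hc : forall c, In c (seq 0 (d (length v))) -> In (v ++ [c]) (level d (S k))).
    { intros c Hc. apply in_seq in Hc. apply level_S_child. auto. rewrite (level_length _ _ _ Hv) in Hc. lia. }
    assert (IH : forall c, In c (seq 0 (d (length v))) ->
      0 <= Zunocc d lam sigma n (v ++ [c]) /\ 0 <= Zocc d lam sigma n (v ++ [c]) /\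
      0 < Zunocc d lam sigma n (v ++ [c]) + Zocc d lam sigma n (v ++ [c]) /\
      (sigma (v ++ [c]) <> Some true -> 0 < Zunocc d lam sigma n (v ++ [c])) /\
      p_unocc d lam sigma n (v ++ [c]) = Zunocc d lam sigma n (v ++ [c]) / (Zunocc d lam sigma n (v ++ [c]) + Zocc d lam sigma n (v ++ [c]))).
    { intros c Hc'. apply (IHn (S k)); auto. lia. }
    assert (P1 : 0 < Tweight d lam sigma weight1 (S n) v false).
    { rewrite Tweight1_S_false. apply prodR_pos. intros c Hc'. apply IH; auto. }
    assert (P2 : 0 <= Tweight d lam sigma weight1 (S n) v true).
    { rewrite Tweight1_S_true. apply prodR_nonneg. intros c Hc'. apply IH; auto. }
    assert (Q : prodR (map (fun c => p_unocc d lam sigma n (v ++ [c])) (seq 0 (d (length v)))) =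
                Tweight d lam sigma weight1 (S n) v true / Tweight d lam sigma weight1 (S n) v false).
    { rewrite Tweight1_S_false, Tweight1_S_true.
      rewrite (map_ext_in (fun c => p_unocc d lam sigma n (v ++ [c]))
         (fun c => Zunocc d lam sigma n (v ++ [c]) / (Zunocc d lam sigma n (v ++ [c]) + Zocc d lam sigma n (v ++ [c])))).
      2:{ intros c Hc'. apply IH; auto. }
      apply prodR_div. intros c Hc'. apply IH; auto. }
    assert (P3 : sigma v = Some true -> 0 < Tweight d lam sigma weight1 (S n) v true).
    { intro Sv. rewrite Tweight1_S_true. apply prodR_pos. intros c Hc'. apply IH; auto.
      apply in_seq in Hc'. rewrite (level_length _ _ _ Hv) in Hc'.
      apply (boundary_ok_child d L sigma k v c); auto; lia. }
    unfold Zunocc, Zocc, consistent_at, indR. simpl p_unocc. rewrite Q.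
    set (Tf := Tweight d lam sigma weight1 (S n) v false) in *.
    set (Tt := Tweight d lam sigma weight1 (S n) v true) in *.
    destruct (sigma v) as [[|]|] eqn:Sv; cbn [negb].
    + specialize (P3 eq_refl).
      split; [nra|split;[nra|split;[nra|split;[congruence|field; nra]]]].
    + split; [nra|split;[nra|split;[nra|split;[intros; nra|field; nra]]]].
    + split; [nra|split;[nra|split;[nra|split;[intros; nra|]]]].
      field. split; nra.
Qed.

Lemma prob_root_eq d lam L sigma : 0 < lam -> boundary_ok d L sigma ->
  prob_root d lam L sigma = 1 - p_unocc d lam sigma L [].
Proof.
  intros Hl Hb. unfold prob_root.
  pose proof (p_unocc_ratio d lam L sigma Hl Hb L 0 [] (or_introl eq_refl) eq_refl) as [H1 [H2 [H3 [_ H5]]]].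
  assert (Z1 : Zpart d lam L sigma (memb []) = Zweighted d lam sigma (0 + L) weight1 (fun b => b))
    by exact (Zpart_Zweighted d lam L sigma (fun b => b)).
  assert (Z2 : Zpart d lam L sigma (fun _ => true) = Zweighted d lam sigma (0 + L) weight1 (fun _ => true))
    by exact (Zpart_Zweighted d lam L sigma (fun _ => true)).
  rewrite Z1, Z2, !Zweighted_add, !Zweighted_0, H5.
  unfold Zunocc, Zocc in *. unfold indR at 2 4 6 8. field. lra.
Qed.

Lemma Rratio_p_unocc d lam L sigma : 0 < lam -> boundary_ok d L sigma ->
  Rratio d lam L sigma = (1 - p_unocc d lam sigma L []) / (1 - (1 - p_unocc d lam sigma L [])).
Proof. intros Hl Hb. unfold Rratio. cbv zeta. rewrite prob_root_eq; auto. Qed.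

Lemma exp_le x y : x <= y -> exp x <= exp y.
Proof. intros [H|H]; [left; apply exp_increasing; auto | subst; lra]. Qed.

Lemma exp_gt1 y : 0 < y -> 1 < exp y.
Proof. intro H. pose proof (exp_ineq1 y). lra. Qed.

Lemma exp_convex t A B : 0 <= t <= 1 ->
  exp (t * A + (1 - t) * B) <= t * exp A + (1 - t) * exp B.
Proof.
  intros Ht. set (m := t * A + (1 - t) * B).
  assert (EA : exp A = exp m * exp (A - m)) by (rewrite <- exp_plus; f_equal; ring).
  assert (EB : exp B = exp m * exp (B - m)) by (rewrite <- exp_plus; f_equal; ring).
  pose proof (exp_ineq1_le (A - m)). pose proof (exp_ineq1_le (B - m)). pose proof (exp_pos m).
  rewrite EA, EB.
  assert (t * (exp m * exp (A - m)) + (1 - t) * (exp m * exp (B - m)) >=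
          t * (exp m * (1 + (A - m))) + (1 - t) * (exp m * (1 + (B - m)))).
  { apply Rle_ge, Rplus_le_compat; apply Rmult_le_compat_l; try lra;
    apply Rmult_le_compat_l; lra. }
  assert (t * (exp m * (1 + (A - m))) + (1 - t) * (exp m * (1 + (B - m))) = exp m) by (unfold m; ring).
  lra.
Qed.

Lemma concave_tangent (f f' : R -> R) :
  (forall x, is_derive f x (f' x)) -> (forall x y, x <= y -> f' y <= f' x) ->
  forall x x0, f x <= f x0 + f' x0 * (x - x0).
Proof.
  intros Hd Hm x x0.
  destruct (MVT_gen f x0 x f') as [c [Hc E]].
  - intros; apply Hd.
  - intros y _. apply continuity_pt_filterlim. apply (ex_derive_continuous f y). eexists; apply Hd.
  - assert (f x - f x0 <= f' x0 * (x - x0)); [|lra].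
    rewrite E. destruct (Rle_dec x0 x).
    + rewrite Rmin_left, Rmax_right in Hc by lra. apply Rmult_le_compat_r; [lra|]. apply Hm. lra.
    + rewrite Rmin_right, Rmax_left in Hc by lra.
      assert (f' x0 <= f' c) by (apply Hm; lra). nra.
Qed.

Definition rpow (x y : R) : R := if Rle_dec x 0 then 0 else exp (y * ln x).

Lemma rpow_nonneg x y : 0 <= rpow x y.
Proof. unfold rpow. destruct (Rle_dec x 0); [lra | left; apply exp_pos]. Qed.

Lemma rpow_pos x y : 0 < x -> rpow x y = exp (y * ln x).
Proof. intro H. unfold rpow. destruct (Rle_dec x 0); [lra | auto]. Qed.

Lemma rpow_0 y : rpow 0 y = 0.
Proof. unfold rpow. destruct (Rle_dec 0 0); lra. Qed.

Lemma rpow_eq0 y q : 0 <= y -> rpow y q = 0 -> y = 0.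
Proof. intros [H|H] E; auto. rewrite rpow_pos in E by auto. pose proof (exp_pos (q * ln y)). lra. Qed.

Lemma rpow_scal x mu p : 0 <= x -> 0 < mu -> rpow (x * mu) p = rpow x p * exp (p * ln mu).
Proof.
  intros [Hx|Hx] Hm.
  - rewrite !rpow_pos by nra. rewrite ln_mult by auto. rewrite <- exp_plus. f_equal. ring.
  - subst. rewrite Rmult_0_l, rpow_0. ring.
Qed.

Lemma rpow_le x y q : 0 <= x <= y -> 0 < q -> rpow x q <= rpow y q.
Proof.
  intros [[H1|H1] H2] Hq.
  - rewrite !rpow_pos by lra. apply exp_le. apply Rmult_le_compat_l; [lra|]. apply ln_le; lra.
  - subst. rewrite rpow_0. apply rpow_nonneg.
Qed.

Lemma rpow_le_inv E q B : 0 <= E -> 0 < q -> 0 < B -> rpow E q <= B -> E <= exp (ln B / q).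
Proof.
  intros [HE|HE] Hq HB H; [|subst; left; apply exp_pos].
  rewrite rpow_pos in H by auto. rewrite <- (exp_ln E) by auto. apply exp_le.
  assert (q * ln E <= ln B). { rewrite <- (ln_exp (q * ln E)). apply ln_le; [apply exp_pos | auto]. }
  apply (Rmult_le_reg_l q); auto. replace (q * (ln B / q)) with (ln B) by (field; lra). lra.
Qed.

Lemma young_ineq x y p q : 0 <= x -> 0 <= y -> 0 < p -> 0 < q -> / p + / q = 1 ->
  x * y <= rpow x p / p + rpow y q / q.
Proof.
  intros Hx Hy Hp Hq Hpq.
  pose proof (rpow_nonneg x p). pose proof (rpow_nonneg y q).
  assert (0 <= rpow x p / p) by (apply Rdiv_le_0_compat; lra).
  assert (0 <= rpow y q / q) by (apply Rdiv_le_0_compat; lra).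
  destruct Hx as [Hx|Hx]; [|subst; lra]. destruct Hy as [Hy|Hy]; [|subst; lra].
  rewrite !rpow_pos by auto.
  replace (x * y) with (exp (/ p * (p * ln x) + (1 - / p) * (q * ln y))).
  2:{ replace (1 - / p) with (/ q) by lra. rewrite <- (exp_ln x) at 2 by auto.
      rewrite <- (exp_ln y) at 2 by auto. rewrite <- exp_plus. f_equal. field. lra. }
  assert (0 < / p) by (apply Rinv_0_lt_compat; auto). assert (0 < / q) by (apply Rinv_0_lt_compat; auto).
  eapply Rle_trans; [apply exp_convex; lra|].
  replace (1 - / p) with (/ q) by lra. unfold Rdiv. lra.
Qed.

Lemma sumR_mul_le_young (l : list (R * R)) (p q m : R) :
  0 < p -> 0 < q -> / p + / q = 1 -> (forall x, In x l -> 0 <= fst x /\ 0 <= snd x) ->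
  sumR (map (fun x => fst x * snd x) l) <=
  exp (p * m) / p * sumR (map (fun x => rpow (fst x) p) l)
  + exp (- q * m) / q * sumR (map (fun x => rpow (snd x) q) l).
Proof.
  intros Hp Hq Hpq Hl. rewrite <- !sumR_scal, <- sumR_plus.
  apply sumR_le. intros x Hx. destruct (Hl x Hx) as [H1 H2].
  set (mu := exp m). assert (Hmu : 0 < mu) by apply exp_pos.
  replace (fst x * snd x) with ((fst x * mu) * (snd x * / mu)) by (field; lra).
  eapply Rle_trans.
  { apply (young_ineq _ _ p q); try lra; apply Rmult_le_pos; try lra.
    left; apply Rinv_0_lt_compat; lra. }
  rewrite !rpow_scal by (auto; apply Rinv_0_lt_compat; auto).
  unfold mu. rewrite ln_Rinv by apply exp_pos. rewrite ln_exp. right.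
  replace (q * - m) with (- q * m) by ring. field; lra.
Qed.

(* Hölder's inequality; [m] is the optimal scaling in [sumR_mul_le_young]. *)
Lemma holder_young_bound (l : list (R * R)) (E beta p q : R) :
  1 < p -> 1 < q -> / p + / q = 1 -> 0 < beta ->
  (forall x, In x l -> 0 <= fst x /\ 0 <= snd x) ->
  E <= sumR (map (fun x => fst x * snd x) l) ->
  sumR (map (fun x => rpow (fst x) p) l) <= beta ->
  rpow E q <= exp ((q - 1) * ln beta) * sumR (map (fun x => rpow (snd x) q) l).
Proof.
  intros Hp Hq Hpq Hb Hl HE Hc.
  set (Y := sumR (map (fun x => rpow (snd x) q) l)).
  assert (HY : 0 <= Y) by (apply sumR_nonneg; intros; apply rpow_nonneg).
  destruct (Rle_dec E 0) as [E0|E0].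
  { unfold rpow at 1. destruct (Rle_dec E 0); [|lra]. pose proof (exp_pos ((q - 1) * ln beta)). nra. }
  destruct HY as [HY|HY].
  2:{ exfalso. assert (Hsnd : forall x, In x l -> snd x = 0).
      { intros x Hx. apply (rpow_eq0 _ q); [apply Hl; auto|].
        apply (sumR_eq0 l (fun x => rpow (snd x) q)); auto. intros; apply rpow_nonneg. }
      rewrite (map_ext_in _ (fun _ => 0)) in HE by (intros x Hx; rewrite Hsnd by auto; ring).
      rewrite sumR_const0 in HE. lra. }
  set (m := (ln Y - ln beta) / (p + q)).
  set (X := (p * ln Y + q * ln beta) / (p + q)).
  assert (Hsum : E <= exp X).
  { eapply Rle_trans; [apply HE|].
    eapply Rle_trans; [apply (sumR_mul_le_young l p q m); auto; lra|]. fold Y.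
    assert (exp (p * m) / p * beta + exp (- q * m) / q * Y = exp X).
    { replace (exp (p * m) / p * beta) with (/ p * exp (p * m + ln beta)).
      2:{ rewrite exp_plus, exp_ln by auto. field; lra. }
      replace (exp (- q * m) / q * Y) with (/ q * exp (- q * m + ln Y)).
      2:{ rewrite exp_plus, exp_ln by auto. field; lra. }
      replace (p * m + ln beta) with X by (unfold X, m; field; lra).
      replace (- q * m + ln Y) with X by (unfold X, m; field; lra).
      rewrite <- Rmult_plus_distr_r, Hpq. ring. }
    assert (0 <= exp (p * m) / p) by (left; apply Rdiv_lt_0_compat; [apply exp_pos|lra]).
    nra. }
  rewrite rpow_pos by lra.
  assert (q * ln E <= q * X).
  { apply Rmult_le_compat_l; [lra|]. rewrite <- (ln_exp X). apply ln_le; lra. }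
  assert (EX : q * X = ln Y + (q - 1) * ln beta).
  { assert (Epq : p + q = p * q).
    { replace (p + q) with (p * q * (/ p + / q)) by (field; lra). rewrite Hpq. ring. }
    assert (Eq : q * / p = q - 1) by (replace (/ p) with (1 - / q) by lra; field; lra).
    unfold X. rewrite Epq, <- Eq. field. lra. }
  eapply Rle_trans with (exp (q * X)); [apply exp_le; lra|].
  rewrite EX, exp_plus, exp_ln by auto. lra.
Qed.
Definition phi1 (x : R) : R := ln (1 - exp (- exp x)).
Definition phi1' (x : R) : R := exp x / (exp (exp x) - 1).

Lemma phi1_derive x : is_derive phi1 x (phi1' x).
Proof.
  unfold phi1, phi1'.
  assert (H1 : exp (- exp x) < 1).
  { rewrite <- exp_0. apply exp_increasing. pose proof (exp_pos x). lra. }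
  assert (H2 : 1 < exp (exp x)) by (apply exp_gt1, exp_pos).
  auto_derive; [lra|].
  rewrite exp_Ropp. field. split; [lra|]. pose proof (exp_pos (exp x)).
  intro. assert (/ exp (exp x) * exp (exp x) = 1) by (field; lra). nra.
Qed.

Lemma phi1'_decr x y : x <= y -> phi1' y <= phi1' x.
Proof.
  intro H. unfold phi1'. set (Y1 := exp x). set (Y2 := exp y).
  assert (P1 : 0 < Y1) by apply exp_pos. assert (P2 : 0 < Y2) by apply exp_pos.
  assert (Y1 <= Y2) by (apply exp_le; auto).
  assert (E1 : 1 < exp Y1) by (apply exp_gt1; auto). assert (E2 : 1 < exp Y2) by (apply exp_gt1; auto).
  assert (C : exp Y1 - 1 <= Y1 / Y2 * (exp Y2 - 1)).
  { pose proof (exp_convex (Y1 / Y2) Y2 0) as Hc.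
    assert (0 <= Y1 / Y2 <= 1).
    { split; [apply Rdiv_le_0_compat; lra|]. unfold Rdiv. apply (Rmult_le_reg_r Y2); [lra|].
      rewrite Rmult_assoc, Rinv_l by lra. lra. }
    specialize (Hc H1). replace (Y1 / Y2 * Y2 + (1 - Y1 / Y2) * 0) with Y1 in Hc by (field; lra).
    rewrite exp_0 in Hc. lra. }
  apply Rmult_le_reg_r with ((exp Y2 - 1) * (exp Y1 - 1)); [nra|].
  replace (Y2 / (exp Y2 - 1) * ((exp Y2 - 1) * (exp Y1 - 1))) with (Y2 * (exp Y1 - 1)) by (field; lra).
  replace (Y1 / (exp Y1 - 1) * ((exp Y2 - 1) * (exp Y1 - 1))) with (Y1 * (exp Y2 - 1)) by (field; lra).
  apply Rmult_le_compat_l with (r := Y2) in C; [|lra].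
  replace (Y2 * (Y1 / Y2 * (exp Y2 - 1))) with (Y1 * (exp Y2 - 1)) in C by (field; lra). lra.
Qed.

(* [Kf lam S] is [kappa^2] for the gain [kappa = s / sqrt (s^2 + 1)] of [msg_map],
   [s = sqrt lam * exp (- S / 2)]. *)
Definition Kf (lam S : R) : R := lam * exp (- S) / (1 + lam * exp (- S)).
Definition phi2 (lam x : R) : R := ln (Kf lam (exp x)).
Definition phi2' (lam x : R) : R := - exp x / (1 + lam * exp (- exp x)).

Lemma phi2_derive lam x : 0 < lam -> is_derive (phi2 lam) x (phi2' lam x).
Proof.
  intro Hl. unfold phi2, phi2', Kf.
  assert (H1 : 0 < exp (- exp x)) by apply exp_pos.
  auto_derive; [repeat split; try apply Rdiv_lt_0_compat; nra|].
  field. nra.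
Qed.

Lemma phi2'_decr lam x y : 0 < lam -> x <= y -> phi2' lam y <= phi2' lam x.
Proof.
  intros Hl H. unfold phi2'.
  assert (A1 : exp x <= exp y) by (apply exp_le; auto).
  assert (A2 : exp (- exp y) <= exp (- exp x)) by (apply exp_le; lra).
  pose proof (exp_pos (- exp y)). pose proof (exp_pos (- exp x)). pose proof (exp_pos x).
  unfold Rdiv. rewrite !Ropp_mult_distr_l_reverse. apply Ropp_le_contravar.
  apply Rmult_le_compat; try lra.
  - left; apply Rinv_0_lt_compat; nra.
  - apply Rinv_le_contravar; nra.
Qed.

(* [lc D] is the critical activity [D^D / (D - 1)^(D + 1)] (see [lc_eq]) and [2 rD D] is
   the Hölder exponent [pD D] used for the potential [arcsinh (sqrt x)]. *)
Definition a0 (D : R) : R := ln (D / (D - 1)).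
Definition rD (D : R) : R := / ((D - 1) * a0 D).
Definition lc (D : R) : R := exp (D * a0 D) / (D - 1).
Definition rho0 (D lam : R) : R := lam * (1 + lc D) / (lc D * (1 + lam)).

Lemma a0_pos D : 1 < D -> 0 < a0 D.
Proof.
  intro H. unfold a0. rewrite <- ln_1. apply ln_increasing; [lra|].
  apply (Rmult_lt_reg_r (D - 1)); [lra|]. field_simplify; lra.
Qed.

Lemma exp_a0 D : 1 < D -> exp (a0 D) = D / (D - 1).
Proof. intro H. unfold a0. apply exp_ln. apply Rdiv_lt_0_compat; lra. Qed.

Lemma lc_pos D : 1 < D -> 0 < lc D.
Proof. intro HD. unfold lc. apply Rdiv_lt_0_compat; [apply exp_pos | lra]. Qed.

Lemma lc_eq D : 1 < D -> lc D = Rpower D D / Rpower (D - 1) (D + 1).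
Proof.
  intro HD. unfold lc, Rpower, a0. rewrite ln_div by lra.
  replace ((D + 1) * ln (D - 1)) with (D * ln (D - 1) + ln (D - 1)) by ring.
  rewrite exp_plus, exp_ln by lra.
  replace (D * (ln D - ln (D - 1))) with (D * ln D + - (D * ln (D - 1))) by ring.
  rewrite exp_plus, exp_Ropp. field. split; [lra | apply Rgt_not_eq, exp_pos].
Qed.

Lemma ln_one_minus_exp_le D a : 1 < D -> 0 < a ->
  ln (1 - exp (- a)) <= - ln D + (D - 1) * a0 D * (ln a - ln (a0 D)).
Proof.
  intros HD Ha. pose proof (a0_pos D HD) as Ha0. pose proof (exp_a0 D HD) as Ea0.
  pose proof (concave_tangent phi1 phi1' phi1_derive phi1'_decr (ln a) (ln (a0 D))) as T.
  unfold phi1, phi1' in T. rewrite !exp_ln in T by auto.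
  assert (E : 1 - exp (- a0 D) = / D) by (rewrite exp_Ropp, Ea0; field; lra).
  rewrite E, ln_Rinv in T by lra. rewrite Ea0 in T.
  replace (a0 D / (D / (D - 1) - 1)) with ((D - 1) * a0 D) in T by (field; lra). exact T.
Qed.

Lemma ln_Kf_lc_le D S : 1 < D -> 0 < S ->
  ln (Kf (lc D) S) <= - ln D - (D - 1) * a0 D * (ln S - ln (D * a0 D)).
Proof.
  intros HD HS. pose proof (a0_pos D HD) as Ha0. pose proof (lc_pos D HD) as HLC.
  assert (Hu0 : 0 < D * a0 D) by nra.
  pose proof (concave_tangent (phi2 (lc D)) (phi2' (lc D)) (fun x => phi2_derive _ x HLC)
                (fun x y H => phi2'_decr _ x y HLC H) (ln S) (ln (D * a0 D))) as T.
  unfold phi2, phi2' in T. rewrite !exp_ln in T by auto.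
  assert (Eu : lc D * exp (- (D * a0 D)) = / (D - 1)).
  { unfold lc. rewrite exp_Ropp. field. split; [lra | apply Rgt_not_eq, exp_pos]. }
  unfold Kf at 2 in T. rewrite Eu in T.
  replace (/ (D - 1) / (1 + / (D - 1))) with (/ D) in T by (field; lra).
  replace (- (D * a0 D) / (1 + / (D - 1))) with (- ((D - 1) * a0 D)) in T by (field; lra).
  rewrite ln_Rinv in T by lra. lra.
Qed.

Lemma ln_Kf_le_rho0 D lam S : 1 < D -> 0 < lam <= lc D -> 0 <= S ->
  ln (Kf lam S) <= ln (rho0 D lam) + ln (Kf (lc D) S).
Proof.
  intros HD Hl HS. pose proof (lc_pos D HD) as HLC. set (LC := lc D) in *.
  assert (Kpos : forall l, 0 < l -> 0 < Kf l S).
  { intros l Hl'. unfold Kf. pose proof (exp_pos (- S)). apply Rdiv_lt_0_compat; nra. }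
  unfold rho0. fold LC.
  rewrite <- ln_mult; [| apply Rdiv_lt_0_compat; nra | apply Kpos; lra].
  apply ln_le; [apply Kpos; lra|].
  unfold Kf. pose proof (exp_pos (- S)) as P. set (e := exp (- S)) in *.
  assert (e <= 1) by (unfold e; rewrite <- exp_0; apply exp_le; lra).
  assert (0 < lam * e) by nra. assert (0 < LC * e) by nra.
  assert (0 <= (LC - lam) * (1 - e)) by (apply Rmult_le_pos; lra).
  assert (0 < lam * e * LC) by (apply Rmult_lt_0_compat; lra).
  apply (Rmult_le_reg_r ((1 + lam * e) * (1 + LC * e) * LC * (1 + lam))).
  { apply Rmult_lt_0_compat; [|lra]. apply Rmult_lt_0_compat; [|lra]. apply Rmult_lt_0_compat; lra. }
  field_simplify; try lra. nra.
Qed.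

(* The two tangent-line bounds combine so that the exponents [(D - 1) a0 D] cancel
   against [rD D]. *)
Lemma log_potential_bound D lam a S : 1 < D -> 0 < lam <= lc D -> 0 < a -> 0 < S ->
  ln (S / a) + rD D * ln (1 - exp (- a)) + rD D * ln (Kf lam S)
  <= rD D * ln (rho0 D lam) + (1 - 2 * rD D) * ln D.
Proof.
  intros HD Hl Ha HS. pose proof (a0_pos D HD) as Ha0.
  assert (HR : rD D * ((D - 1) * a0 D) = 1) by (unfold rD; field; split; lra).
  assert (HR0 : 0 < rD D) by (unfold rD; apply Rinv_0_lt_compat; nra).
  pose proof (ln_one_minus_exp_le D a HD Ha) as T1.
  pose proof (ln_Kf_lc_le D S HD HS) as T2.
  pose proof (ln_Kf_le_rho0 D lam S HD Hl (Rlt_le _ _ HS)) as M.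
  assert (LD : ln (D * a0 D) - ln (a0 D) = ln D) by (rewrite ln_mult by lra; ring).
  rewrite ln_div by auto.
  apply Rmult_le_compat_l with (r := rD D) in T1, T2, M; try lra.
  replace (rD D * (- ln D + (D - 1) * a0 D * (ln a - ln (a0 D))))
    with (rD D * - ln D + rD D * ((D - 1) * a0 D) * (ln a - ln (a0 D))) in T1 by ring.
  replace (rD D * (- ln D - (D - 1) * a0 D * (ln S - ln (D * a0 D))))
    with (rD D * - ln D - rD D * ((D - 1) * a0 D) * (ln S - ln (D * a0 D))) in T2 by ring.
  rewrite HR in T1, T2. lra.
Qed.
Definition lncosh (y : R) : R := ln (cosh y).

Lemma cosh_pos y : 0 < cosh y.
Proof. unfold cosh. pose proof (exp_pos y). pose proof (exp_pos (- y)). lra. Qed.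

Lemma cosh_sinh y : cosh y * cosh y - sinh y * sinh y = 1.
Proof.
  unfold cosh, sinh. assert (exp y * exp (- y) = 1) by (rewrite <- exp_plus, Rplus_opp_r, exp_0; auto).
  nra.
Qed.

Lemma cosh_gt1 y : y <> 0 -> 1 < cosh y.
Proof.
  intro H. unfold cosh. pose proof (exp_ineq1 y H). assert (- y <> 0) by lra.
  pose proof (exp_ineq1 (- y) H1). lra.
Qed.

Lemma lncosh_nonneg y : 0 <= lncosh y.
Proof.
  unfold lncosh. rewrite <- ln_1. apply ln_le; [lra|].
  unfold cosh. pose proof (exp_ineq1_le y). pose proof (exp_ineq1_le (- y)). lra.
Qed.

Lemma lncosh_pos y : y <> 0 -> 0 < lncosh y.
Proof. intro H. unfold lncosh. rewrite <- ln_1. apply ln_increasing; [lra | apply cosh_gt1; auto]. Qed.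

Lemma lncosh_derive y : is_derive lncosh y (tanh y).
Proof.
  unfold lncosh, tanh, cosh, sinh. pose proof (exp_pos y). pose proof (exp_pos (- y)).
  auto_derive; [lra|]. field. lra.
Qed.

Lemma exp_m2lncosh y : exp (- (2 * lncosh y)) = / (cosh y * cosh y).
Proof.
  unfold lncosh. replace (- (2 * ln (cosh y))) with (- (ln (cosh y) + ln (cosh y))) by ring.
  pose proof (cosh_pos y).
  rewrite <- ln_mult, exp_Ropp, exp_ln by nra. reflexivity.
Qed.

Lemma tanh_0 : tanh 0 = 0.
Proof. unfold tanh. rewrite sinh_0. unfold Rdiv. ring. Qed.

Lemma tanh_nonneg y : 0 <= y -> 0 <= tanh y.
Proof.
  intro H. unfold tanh. apply Rdiv_le_0_compat; [|apply cosh_pos]. unfold sinh.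
  assert (exp (- y) <= exp y) by (apply exp_le; lra). lra.
Qed.

Lemma tanh_sq y : tanh y * tanh y = 1 - exp (- (2 * lncosh y)).
Proof.
  rewrite exp_m2lncosh. unfold tanh. pose proof (cosh_pos y). pose proof (cosh_sinh y).
  field_simplify; try lra. rewrite <- H0. field. lra.
Qed.

Lemma arcsinh_derive z : is_derive arcsinh z (/ sqrt (z * z + 1)).
Proof.
  apply is_derive_Reals. replace (z * z) with (z ^ 2) by ring. apply derivable_pt_lim_arcsinh.
Qed.

Lemma cosh_arcsinh z : cosh (arcsinh z) = sqrt (z * z + 1).
Proof.
  pose proof (cosh_sinh (arcsinh z)) as E. rewrite sinh_arcsinh in E.
  pose proof (cosh_pos (arcsinh z)).
  rewrite <- (sqrt_square (cosh (arcsinh z))) by lra. f_equal. lra.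
Qed.

Lemma arcsinh_pos z : 0 < z -> 0 < arcsinh z.
Proof. intro H. rewrite <- arcsinh_0. apply arcsinh_lt. auto. Qed.

(* In terms of the potentials [m_c = arcsinh (sqrt x_c)] of the children, the free-vertex
   recursion [x_v = lam * prod_c 1 / (1 + x_c)] reads [m_v = msg_map lam (m_c)_c], since
   [1 + sinh m ^ 2 = cosh m ^ 2]. *)
Definition msg_map (lam : R) (ys : list R) : R := arcsinh (sqrt lam * exp (- sumR (map lncosh ys))).

Definition msg_gain (lam : R) (zs : list R) : R :=
  let s := sqrt lam * exp (- sumR (map lncosh zs)) in s / sqrt (s * s + 1).

Lemma msg_gain_pos lam zs : 0 < lam -> 0 < msg_gain lam zs.
Proof.
  intro Hl. unfold msg_gain. set (s := sqrt lam * exp (- sumR (map lncosh zs))).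
  assert (0 < s) by (apply Rmult_lt_0_compat; [apply sqrt_lt_R0; lra | apply exp_pos]).
  apply Rdiv_lt_0_compat; auto. apply sqrt_lt_R0; nra.
Qed.

Lemma msg_gain_sq lam zs : 0 < lam ->
  msg_gain lam zs * msg_gain lam zs = Kf lam (sumR (map (fun z => 2 * lncosh z) zs)).
Proof.
  intro Hl. unfold msg_gain, Kf. rewrite sumR_scal. set (T := sumR (map lncosh zs)).
  set (s := sqrt lam * exp (- T)).
  assert (Es : s * s = lam * exp (- (2 * T))).
  { unfold s. replace (- (2 * T)) with (- T + - T) by ring. rewrite exp_plus.
    replace (sqrt lam * exp (- T) * (sqrt lam * exp (- T)))
      with (sqrt lam * sqrt lam * (exp (- T) * exp (- T))) by ring.
    rewrite sqrt_sqrt by lra. ring. }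
  assert (0 <= s * s) by nra.
  assert (Q : sqrt (s * s + 1) * sqrt (s * s + 1) = s * s + 1) by (apply sqrt_sqrt; lra).
  assert (0 < sqrt (s * s + 1)) by (apply sqrt_lt_R0; lra).
  rewrite <- Es. field_simplify; try lra.
  replace (sqrt (s * s + 1) ^ 2) with (s * s + 1) by (simpl; lra). field. lra.
Qed.

Lemma is_derive_eq (f : R -> R) x a b : is_derive f x a -> a = b -> is_derive f x b.
Proof. intros H <-. exact H. Qed.

Definition interp (t : R) (p : R * R) : R := snd p + t * (fst p - snd p).

Definition msg_map_interp (lam : R) (ps : list (R * R)) (t : R) : R :=
  msg_map lam (map (interp t) ps).

Lemma sum_lncosh_interp_derive ps t :
  is_derive (fun t => sumR (map lncosh (map (interp t) ps))) t
    (sumR (map (fun p => tanh (interp t p) * (fst p - snd p)) ps)).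
Proof.
  induction ps as [|p ps IH]; simpl; [auto_derive; auto|].
  eapply is_derive_eq; [apply (is_derive_plus (fun t => lncosh (interp t p))); [|apply IH]|].
  - unfold interp. apply (is_derive_comp lncosh (fun t => snd p + t * (fst p - snd p))).
    + apply lncosh_derive.
    + auto_derive; auto.
  - unfold plus, scal; simpl. unfold mult, interp; simpl. ring.
Qed.

Lemma msg_map_interp_derive lam ps t :
  let s := sqrt lam * exp (- sumR (map lncosh (map (interp t) ps))) in
  is_derive (msg_map_interp lam ps) t
    (- (s / sqrt (s * s + 1)) * sumR (map (fun p => tanh (interp t p) * (fst p - snd p)) ps)).
Proof.
  intro s. unfold msg_map_interp, msg_map.
  eapply is_derive_eq;
    [apply (is_derive_comp arcsinh (fun t => sqrt lam * exp (- sumR (map lncosh (map (interp t) ps)))))|].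
  - apply arcsinh_derive.
  - apply (is_derive_scal (fun t => exp (- sumR (map lncosh (map (interp t) ps))))).
    apply (is_derive_comp exp (fun t => - sumR (map lncosh (map (interp t) ps)))); [apply is_derive_exp|].
    apply (is_derive_opp (fun t => sumR (map lncosh (map (interp t) ps)))). apply sum_lncosh_interp_derive.
  - unfold opp, scal; simpl. unfold mult; simpl. unfold s, Rdiv. ring.
Qed.

Lemma msg_map_mvt lam ps : 0 < lam -> (forall p, In p ps -> 0 <= fst p /\ 0 <= snd p) ->
  exists c, 0 <= c <= 1 /\
  Rabs (msg_map lam (map fst ps) - msg_map lam (map snd ps)) <=
  sumR (map (fun p => msg_gain lam (map (interp c) ps) * tanh (interp c p) * Rabs (fst p - snd p)) ps).
Proof.
  intros Hl Hps.
  destruct (MVT_gen (msg_map_interp lam ps) 0 1 _ (fun t _ => msg_map_interp_derive lam ps t)) as [c [Hc E]].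
  { intros y _. apply continuity_pt_filterlim. apply (ex_derive_continuous (msg_map_interp lam ps) y).
    eexists; apply msg_map_interp_derive. }
  rewrite Rmin_left, Rmax_right in Hc by lra.
  exists c. split; auto.
  assert (Ends : forall (t : R) (f : R * R -> R), (forall p, interp t p = f p) ->
                 msg_map_interp lam ps t = msg_map lam (map f ps)).
  { intros t f Hf. unfold msg_map_interp. f_equal. apply map_ext. auto. }
  rewrite <- (Ends 1 fst), <- (Ends 0 snd) by (intro; unfold interp; ring).
  rewrite E, Rminus_0_r, Rmult_1_r, Rabs_mult, Rabs_Ropp.
  fold (msg_gain lam (map (interp c) ps)).
  pose proof (msg_gain_pos lam (map (interp c) ps) Hl) as Hk.
  rewrite (Rabs_right (msg_gain _ _)) by lra.
  rewrite (map_ext (fun p => msg_gain lam (map (interp c) ps) * tanh (interp c p) * Rabs (fst p - snd p))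
                   (fun p => msg_gain lam (map (interp c) ps) *
                                (tanh (interp c p) * Rabs (fst p - snd p)))) by (intro; ring).
  rewrite sumR_scal. apply Rmult_le_compat_l; [lra|].
  apply Rabs_sumR_le. intros p Hp. rewrite Rabs_mult, (Rabs_right (tanh _)); [lra|].
  apply Rle_ge, tanh_nonneg. unfold interp. destruct (Hps p Hp). nra.
Qed.
Lemma ln_lt_sub1 y : 0 < y -> y <> 1 -> ln y < y - 1.
Proof.
  intros H H1. rewrite <- (exp_ln y) at 2 by auto.
  enough (1 + ln y < exp (ln y)) by lra. apply exp_ineq1.
  intro E. apply H1. rewrite <- (exp_ln y) by auto. rewrite E, exp_0; auto.
Qed.

Lemma rD_gt1 D : 1 < D -> 1 < rD D.
Proof.
  intro HD. unfold rD. pose proof (a0_pos D HD).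
  assert (a0 D < / (D - 1)).
  { unfold a0. eapply Rlt_le_trans; [apply ln_lt_sub1|].
    - apply Rdiv_lt_0_compat; lra.
    - intro E. assert (E2 : D = D / (D - 1) * (D - 1)) by (field; lra). rewrite E in E2. lra.
    - right. field. lra. }
  assert ((D - 1) * a0 D < 1).
  { apply (Rmult_lt_compat_l (D - 1)) in H0; [|lra]. rewrite Rinv_r in H0 by lra. lra. }
  rewrite <- Rinv_1. apply Rinv_lt_contravar; nra.
Qed.

Definition pD (D : R) : R := 2 * rD D.
Definition qD (D : R) : R := pD D / (pD D - 1).
Definition betaD (D lam : R) : R := exp (rD D * ln (rho0 D lam) + (1 - 2 * rD D) * ln D).
Definition gam (D lam : R) : R := exp ((qD D - 1) * ln (betaD D lam)).

Lemma gam_pos D lam : 0 < gam D lam.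
Proof. apply exp_pos. Qed.

Lemma pD_qD_conjugate D : 1 < D -> 1 < pD D /\ 1 < qD D /\ / pD D + / qD D = 1.
Proof.
  intro HD. pose proof (rD_gt1 D HD). unfold qD, pD.
  split; [lra|]. split; [|field; lra].
  apply (Rmult_lt_reg_r (2 * rD D - 1)); [lra|]. field_simplify; lra.
Qed.

(* Weighted form of [msg_gain_rpow_sum]: the weights [2 lncosh z / S] sum to one, and each
   term is controlled by [log_potential_bound] with [a = 2 lncosh z]. *)
Lemma msg_gain_tanh_rpow_le D lam zs z : 1 < D -> 0 < lam <= lc D -> In z zs ->
  rpow (msg_gain lam zs * tanh z) (pD D) * sumR (map (fun z => 2 * lncosh z) zs)
  <= betaD D lam * (2 * lncosh z).
Proof.
  intros HD Hl Hz. set (S := sumR (map (fun z => 2 * lncosh z) zs)).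
  set (a := 2 * lncosh z). set (k := msg_gain lam zs).
  assert (Hk : 0 < k) by (apply msg_gain_pos; lra).
  pose proof (lncosh_nonneg z). pose proof (exp_pos (rD D * ln (rho0 D lam) + (1 - 2 * rD D) * ln D)).
  destruct (Rle_dec (k * tanh z) 0) as [Hneg|Hpos].
  { unfold rpow. destruct (Rle_dec (k * tanh z) 0); [|lra]. rewrite Rmult_0_l. apply Rmult_le_pos; [left; apply exp_pos | unfold a; lra]. }
  apply Rnot_le_lt in Hpos.
  assert (Ht : 0 < tanh z) by (apply (Rmult_lt_reg_l k); lra).
  assert (Ha : 0 < a).
  { unfold a. assert (z <> 0) by (intro; subst; rewrite tanh_0 in Ht; lra).
    pose proof (lncosh_pos z H1). lra. }
  assert (HaS : a <= S).
  { apply (sumR_le_in zs (fun z => 2 * lncosh z)); auto.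
    intros y _. pose proof (lncosh_nonneg y). lra. }
  assert (E1 : pD D * ln (k * tanh z) = rD D * (ln (Kf lam S) + ln (1 - exp (- a)))).
  { unfold S, a, pD. rewrite <- msg_gain_sq, <- tanh_sq by lra. fold k.
    rewrite <- ln_mult by nra.
    replace (k * k * (tanh z * tanh z)) with ((k * tanh z) * (k * tanh z)) by ring.
    rewrite (ln_mult _ _ Hpos Hpos). ring. }
  pose proof (log_potential_bound D lam a S HD Hl Ha (Rlt_le_trans _ _ _ Ha HaS)) as K.
  rewrite rpow_pos, E1 by lra.
  assert (HSa : 0 < S / a) by (apply Rdiv_lt_0_compat; lra).
  replace (betaD D lam * a) with (exp (ln (betaD D lam) - ln (S / a)) * S).
  2:{ unfold Rminus. rewrite exp_plus, exp_Ropp, !exp_ln by (auto; apply exp_pos). field. lra. }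
  apply Rmult_le_compat_r; [lra|]. apply exp_le. unfold betaD. rewrite ln_exp. lra.
Qed.

Lemma msg_gain_rpow_sum D lam zs : 1 < D -> 0 < lam <= lc D ->
  sumR (map (fun z => rpow (msg_gain lam zs * tanh z) (pD D)) zs) <= betaD D lam.
Proof.
  intros HD Hl. set (S := sumR (map (fun z => 2 * lncosh z) zs)).
  assert (HS : 0 <= S) by (apply sumR_nonneg; intros; pose proof (lncosh_nonneg x); lra).
  assert (Hb : 0 < betaD D lam) by apply exp_pos.
  destruct HS as [HS|HS].
  - apply (Rmult_le_reg_r S); auto.
    rewrite Rmult_comm, <- sumR_scal.
    eapply Rle_trans; [apply (sumR_le _ _ (fun z => betaD D lam * (2 * lncosh z)))|].
    + intros z Hz. rewrite Rmult_comm. apply msg_gain_tanh_rpow_le; auto.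
    + rewrite sumR_scal. fold S. lra.
  - rewrite (map_ext_in _ (fun _ => 0)), sumR_const0; [lra|].
    intros z Hz. assert (2 * lncosh z = 0).
    { apply (sumR_eq0 zs (fun z => 2 * lncosh z)); auto. intros; pose proof (lncosh_nonneg x); lra. }
    destruct (Req_dec z 0) as [->|Z].
    + rewrite tanh_0, Rmult_0_r, rpow_0. reflexivity.
    + pose proof (lncosh_pos z Z). lra.
Qed.

(* Hölder's inequality with exponents [pD D], [qD D] applied to the mean value bound. *)
Lemma msg_map_contraction D lam ps : 1 < D -> 0 < lam <= lc D ->
  (forall p, In p ps -> 0 <= fst p /\ 0 <= snd p) ->
  rpow (Rabs (msg_map lam (map fst ps) - msg_map lam (map snd ps))) (qD D) <=
  gam D lam * sumR (map (fun p => rpow (Rabs (fst p - snd p)) (qD D)) ps).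
Proof.
  intros HD Hl Hps. destruct (pD_qD_conjugate D HD) as [Hp [Hq Hpq]].
  destruct (msg_map_mvt lam ps (proj1 Hl) Hps) as [c [Hc HE]].
  set (zs := map (interp c) ps).
  pose proof (holder_young_bound
    (map (fun p => (msg_gain lam zs * tanh (interp c p), Rabs (fst p - snd p))) ps)
    (Rabs (msg_map lam (map fst ps) - msg_map lam (map snd ps))) (betaD D lam) (pD D) (qD D)
    Hp Hq Hpq (exp_pos _)) as H.
  rewrite !map_map in H. simpl in H. unfold gam. apply H.
  - intros x Hx. apply in_map_iff in Hx. destruct Hx as [p [<- Hp']]. simpl.
    split; [|apply Rabs_pos].
    apply Rmult_le_pos; [left; apply msg_gain_pos; lra|].
    apply tanh_nonneg. unfold interp. destruct (Hps p Hp'). nra.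
  - exact HE.
  - pose proof (msg_gain_rpow_sum D lam zs HD Hl) as CS. unfold zs in CS at 2. rewrite map_map in CS.
    exact CS.
Qed.
(* The ratio [R_v = p / (1 - p)] at a free vertex [v], computed in the subtree of height [n]. *)
Definition ratio_free (d : nat -> nat) (lam : R) (sigma : bcond) (n : nat) (v : list nat) : R :=
  match n with
  | O => lam
  | S n' => lam * prodR (map (fun c => p_unocc d lam sigma n' (v ++ [c])) (seq 0 (d (length v))))
  end.

Definition msg (d : nat -> nat) (lam : R) (sigma : bcond) (n : nat) (v : list nat) : R :=
  arcsinh (sqrt (ratio_free d lam sigma n v)).

Lemma inv_1plus_range x : 0 <= x -> 0 <= 1 / (1 + x) <= 1.
Proof.
  intro H. split; [apply Rdiv_le_0_compat; lra|].
  unfold Rdiv. rewrite Rmult_1_l. rewrite <- Rinv_1 at 2. apply Rinv_le_contravar; lra.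
Qed.

Lemma p_unocc_range d lam sigma n v : 0 < lam -> 0 <= p_unocc d lam sigma n v <= 1.
Proof.
  intro Hl. revert v; induction n; intro v; simpl.
  - unfold p_unocc_leaf. destruct (sigma v) as [[|]|]; try lra. apply inv_1plus_range; lra.
  - destruct (sigma v) as [[|]|]; try lra.
    assert (0 <= prodR (map (fun c => p_unocc d lam sigma n (v ++ [c])) (seq 0 (d (length v))))).
    { apply prodR_nonneg. intros. apply IHn. }
    apply inv_1plus_range; nra.
Qed.

Lemma ratio_free_range d lam sigma n v : 0 < lam -> 0 <= ratio_free d lam sigma n v <= lam.
Proof.
  intro Hl. destruct n; simpl; [lra|].
  pose proof (prodR_nonneg (seq 0 (d (length v))) (fun c => p_unocc d lam sigma n (v ++ [c]))
    (fun c _ => proj1 (p_unocc_range d lam sigma n (v ++ [c]) Hl))).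
  pose proof (prodR_le1 (seq 0 (d (length v))) (fun c => p_unocc d lam sigma n (v ++ [c]))
    (fun c _ => p_unocc_range d lam sigma n (v ++ [c]) Hl)).
  split; nra.
Qed.

Lemma p_unocc_free d lam sigma n v :
  sigma v = None -> p_unocc d lam sigma n v = 1 / (1 + ratio_free d lam sigma n v).
Proof. intro H. destruct n; simpl; unfold p_unocc_leaf; rewrite H; reflexivity. Qed.

Lemma msg_range d lam sigma n v : 0 < lam ->
  0 <= msg d lam sigma n v <= arcsinh (sqrt lam).
Proof.
  intro Hl. unfold msg. pose proof (ratio_free_range d lam sigma n v Hl).
  split; [rewrite <- arcsinh_0|]; apply arcsinh_le; [apply sqrt_pos | apply sqrt_le_1; lra].
Qed.

Lemma msg_0 d lam sigma v : msg d lam sigma 0 v = arcsinh (sqrt lam).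
Proof. reflexivity. Qed.

Lemma p_unocc_free_exp d lam sigma n v : 0 < lam -> sigma v = None ->
  p_unocc d lam sigma n v = exp (- (2 * lncosh (msg d lam sigma n v))).
Proof.
  intros Hl H. rewrite p_unocc_free, exp_m2lncosh by auto. unfold msg. rewrite cosh_arcsinh.
  pose proof (ratio_free_range d lam sigma n v Hl).
  rewrite sqrt_sqrt by (rewrite sqrt_sqrt; lra). rewrite sqrt_sqrt by lra. rewrite Rplus_comm. field. lra.
Qed.

Definition free_children (d : nat -> nat) (sigma : bcond) (v : list nat) : list nat :=
  filter (fun c => match sigma (v ++ [c]) with None => true | _ => false end) (seq 0 (d (length v))).

(* Children fixed unoccupied contribute a factor 1 and drop out of the recursion. *)
Lemma msg_S d lam sigma n v : 0 < lam -> sigma v = None ->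
  (forall c, (c < d (length v))%nat -> sigma (v ++ [c]) <> Some true) ->
  msg d lam sigma (S n) v =
  msg_map lam (map (fun c => msg d lam sigma n (v ++ [c])) (free_children d sigma v)).
Proof.
  intros Hl Hv Hc. unfold msg at 1, msg_map. f_equal. simpl ratio_free.
  rewrite (prodR_filter _ _ (fun c => match sigma (v ++ [c]) with None => true | _ => false end)).
  2:{ intros c Hin E. apply in_seq in Hin. destruct (sigma (v ++ [c])) as [[|]|] eqn:S.
      - exfalso; apply (Hc c); auto; lia.
      - destruct n; simpl; [unfold p_unocc_leaf|]; rewrite S; reflexivity.
      - discriminate. }
  fold (free_children d sigma v).
  rewrite (map_ext_in _ (fun c => exp (- (2 * lncosh (msg d lam sigma n (v ++ [c])))))).
  2:{ intros c Hin. apply p_unocc_free_exp; auto. apply filter_In in Hin as [_ Hm].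
      destruct (sigma (v ++ [c])) as [b|]; [discriminate | reflexivity]. }
  rewrite prodR_exp, map_map.
  set (T := sumR (map (fun c => lncosh (msg d lam sigma n (v ++ [c]))) (free_children d sigma v))).
  replace (sumR (map (fun x => - (2 * lncosh (msg d lam sigma n (v ++ [x])))) (free_children d sigma v)))
    with (- T + - T).
  2:{ unfold T. rewrite (map_ext (fun x => - (2 * lncosh (msg d lam sigma n (v ++ [x]))))
        (fun x => -2 * lncosh (msg d lam sigma n (v ++ [x])))) by (intro; ring).
      rewrite sumR_scal. ring. }
  rewrite exp_plus. pose proof (exp_pos (- T)).
  rewrite sqrt_mult, sqrt_square by nra. reflexivity.
Qed.

Lemma ratio_free_occupied_child d lam sigma n v c :
  (c < d (length v))%nat -> sigma (v ++ [c]) = Some true -> ratio_free d lam sigma (S n) v = 0.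
Proof.
  intros Hc Hs. simpl. rewrite (prodR_eq0 _ _ c); [ring | apply in_seq; lia |].
  destruct n; simpl; [unfold p_unocc_leaf|]; rewrite Hs; auto.
Qed.

Lemma msg_S_diff_rpow_le D lam d sigma tau n v : 1 < D -> 0 < lam <= lc D ->
  sigma v = None -> tau v = None -> (forall c, sigma (v ++ [c]) = tau (v ++ [c])) ->
  rpow (Rabs (msg d lam sigma (S n) v - msg d lam tau (S n) v)) (qD D) <=
  gam D lam * sumR (map (fun c => rpow (Rabs (msg d lam sigma n (v ++ [c]) - msg d lam tau n (v ++ [c]))) (qD D))
                     (free_children d sigma v)).
Proof.
  intros HD Hl Hsv Htv Hch.
  assert (RHS0 : 0 <= gam D lam * sumR (map (fun c => rpow (Rabs (msg d lam sigma n (v ++ [c])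
                  - msg d lam tau n (v ++ [c]))) (qD D)) (free_children d sigma v))).
  { apply Rmult_le_pos; [left; apply gam_pos | apply sumR_nonneg; intros; apply rpow_nonneg]. }
  destruct (existsb (fun c => match sigma (v ++ [c]) with Some true => true | _ => false end)
              (seq 0 (d (length v)))) eqn:Ex.
  - apply existsb_exists in Ex. destruct Ex as [c [Hc Hs]]. apply in_seq in Hc.
    destruct (sigma (v ++ [c])) as [[|]|] eqn:Sc; try discriminate.
    unfold msg. rewrite (ratio_free_occupied_child d lam sigma n v c),
      (ratio_free_occupied_child d lam tau n v c) by (try rewrite <- Hch; auto; lia).
    rewrite Rminus_diag, Rabs_R0, rpow_0. auto.
  - assert (NT : forall c, (c < d (length v))%nat -> sigma (v ++ [c]) <> Some true).
    { intros c Hc E. rewrite <- not_true_iff_false in Ex. apply Ex, existsb_exists.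
      exists c. split; [apply in_seq; lia | rewrite E; auto]. }
    rewrite (msg_S d lam sigma n v), (msg_S d lam tau n v) by (first [lra | solve [auto] | intros c Hc; rewrite <- Hch; auto]).
    assert (EF : free_children d tau v = free_children d sigma v).
    { unfold free_children. apply filter_ext. intro c. rewrite Hch. auto. }
    rewrite EF.
    set (ps := map (fun c => (msg d lam sigma n (v ++ [c]), msg d lam tau n (v ++ [c]))) (free_children d sigma v)).
    replace (map (fun c => msg d lam sigma n (v ++ [c])) (free_children d sigma v)) with (map fst ps)
      by (unfold ps; rewrite map_map; auto).
    replace (map (fun c => msg d lam tau n (v ++ [c])) (free_children d sigma v)) with (map snd ps)
      by (unfold ps; rewrite map_map; auto).
    eapply Rle_trans; [apply msg_map_contraction; auto|].
    + intros p Hp. unfold ps in Hp. apply in_map_iff in Hp. destruct Hp as [c [<- _]]. simpl.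
      split; apply msg_range; lra.
    + unfold ps. rewrite map_map. right. reflexivity.
Qed.

Definition Nfrom (d : nat -> nat) (k j : nat) : R := prodR (map (fun i => INR (d i)) (seq k j)).

Lemma Nfrom_nonneg d k j : 0 <= Nfrom d k j.
Proof. unfold Nfrom. apply prodR_nonneg. intros; apply pos_INR. Qed.

Lemma Nfrom_S d k j : Nfrom d k (S j) = INR (d k) * Nfrom d (S k) j.
Proof. reflexivity. Qed.

Lemma msg_diff_rpow_bound D lam d sigma tau m : 1 < D -> 0 < lam <= lc D ->
  (forall w, (length w <= m)%nat -> sigma w = tau w) ->
  forall j n v, (length v + j = m)%nat -> sigma v = None ->
  rpow (Rabs (msg d lam sigma n v - msg d lam tau n v)) (qD D) <=
  gam D lam ^ j * Nfrom d (length v) j * rpow (arcsinh (sqrt lam)) (qD D).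
Proof.
  intros HD Hl Hag. destruct (pD_qD_conjugate D HD) as [Hp [Hq Hpq]].
  pose proof (gam_pos D lam) as Hg.
  induction j as [|j IH]; intros n v Hlen Hv.
  - simpl. unfold Nfrom; simpl. rewrite !Rmult_1_l. apply rpow_le; [|lra].
    pose proof (msg_range d lam sigma n v (proj1 Hl)). pose proof (msg_range d lam tau n v (proj1 Hl)).
    split; [apply Rabs_pos | apply Rabs_le; lra].
  - set (B := gam D lam ^ j * Nfrom d (S (length v)) j * rpow (arcsinh (sqrt lam)) (qD D)).
    assert (HB : 0 <= B).
    { apply Rmult_le_pos; [|apply rpow_nonneg]. apply Rmult_le_pos; [|apply Nfrom_nonneg]. apply pow_le; lra. }
    replace (gam D lam ^ S j * Nfrom d (length v) (S j) * rpow (arcsinh (sqrt lam)) (qD D))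
      with (gam D lam * (INR (d (length v)) * B)) by (unfold B; rewrite Nfrom_S; simpl; ring).
    destruct n as [|n].
    { rewrite !msg_0, Rminus_diag, Rabs_R0, rpow_0. pose proof (pos_INR (d (length v))).
      apply Rmult_le_pos; [lra | apply Rmult_le_pos; lra]. }
    eapply Rle_trans.
    { apply msg_S_diff_rpow_le; auto.
      - rewrite <- Hag by lia. auto.
      - intro c. apply Hag. rewrite length_app. simpl. lia. }
    apply Rmult_le_compat_l; [lra|].
    eapply Rle_trans; [apply (sumR_le_length _ _ B)|].
    + intros c Hc. unfold B. replace (S (length v)) with (length (v ++ [c])) by (rewrite length_app; simpl; lia).
      apply IH; [rewrite length_app; simpl; lia|].
      unfold free_children in Hc. apply filter_In in Hc as [_ Hm].
      destruct (sigma (v ++ [c])) as [b|]; [discriminate | auto].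
    + apply Rmult_le_compat_r; auto. apply le_INR. unfold free_children.
      rewrite <- (length_seq (d (length v)) 0) at 2. apply filter_length_le.
Qed.
Lemma root_l_nonneg x l : 0 <= root_l x l.
Proof. unfold root_l. destruct (Req_EM_T x 0); [lra | unfold Rpower; left; apply exp_pos]. Qed.

Lemma Nlev_nonneg d l : 0 <= Nlev d l.
Proof. unfold Nlev. apply prodR_nonneg. intros; apply pos_INR. Qed.

Lemma Nlev_le_pow d m D2 : 0 < D2 -> root_l (Nlev d m) m < D2 -> Nlev d m <= D2 ^ m.
Proof.
  intros HD2 Hm. destruct m as [|m]; [unfold Nlev; simpl; lra|].
  unfold root_l in Hm. destruct (Req_EM_T (Nlev d (S m)) 0) as [E|E].
  { rewrite E. left; apply pow_lt; auto. }
  pose proof (Nlev_nonneg d (S m)). assert (HN : 0 < Nlev d (S m)) by lra.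
  assert (HS : 0 < INR (S m)) by (apply lt_0_INR; lia).
  rewrite <- (exp_ln (Nlev d (S m))), <- Rpower_pow by auto. unfold Rpower.
  apply exp_le. unfold Rpower in Hm.
  assert (/ INR (S m) * ln (Nlev d (S m)) < ln D2).
  { rewrite <- (ln_exp (/ INR (S m) * ln (Nlev d (S m)))). apply ln_increasing; [apply exp_pos | lra]. }
  apply (Rmult_lt_compat_l (INR (S m))) in H0; auto.
  rewrite <- Rmult_assoc, Rinv_r in H0 by lra. lra.
Qed.

(* Finitely many exceptional levels are absorbed into the constant. *)
Lemma Nlev_le_geometric d D2 K0 : 0 < D2 ->
  (forall m, (K0 <= m)%nat -> root_l (Nlev d m) m < D2) ->
  exists C0, 1 <= C0 /\ forall m, Nlev d m <= C0 * D2 ^ m.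
Proof.
  intros HD2 HK0.
  set (C0 := 1 + sumR (map (fun n => Nlev d n / D2 ^ n) (seq 0 K0))).
  assert (Hterm : forall n, In n (seq 0 K0) -> 0 <= Nlev d n / D2 ^ n)
    by (intros n _; apply Rdiv_le_0_compat; [apply Nlev_nonneg | apply pow_lt; auto]).
  pose proof (sumR_nonneg _ _ Hterm).
  exists C0. split; [unfold C0; lra|]. intro m. pose proof (pow_lt D2 m HD2) as Pm.
  destruct (Compare_dec.le_lt_dec K0 m) as [Hm|Hm].
  - pose proof (Nlev_le_pow d m D2 HD2 (HK0 m Hm)). unfold C0. nra.
  - assert (Nlev d m / D2 ^ m <= C0 - 1).
    { unfold C0. ring_simplify. apply (sumR_le_in _ (fun n => Nlev d n / D2 ^ n)); auto.
      apply in_seq; lia. }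
    assert (Nlev d m <= (C0 - 1) * D2 ^ m).
    { apply (Rmult_le_reg_r (/ D2 ^ m)); [apply Rinv_0_lt_compat; auto|].
      replace ((C0 - 1) * D2 ^ m * / D2 ^ m) with (C0 - 1) by (field; lra). auto. }
    nra.
Qed.

Lemma gam_mul_lt1 D lam : 1 < D -> 0 < lam < lc D -> gam D lam * D < 1.
Proof.
  intros HD Hl. pose proof (rD_gt1 D HD) as Hr.
  assert (Hr0 : 0 < rho0 D lam < 1).
  { unfold rho0. split; [apply Rdiv_lt_0_compat; nra|].
    apply (Rmult_lt_reg_r (lc D * (1 + lam))); [nra|]. field_simplify; nra. }
  assert (Eq1 : qD D - 1 = / (2 * rD D - 1)) by (unfold qD, pD; field; lra).
  unfold gam, betaD. rewrite ln_exp.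
  replace ((qD D - 1) * (rD D * ln (rho0 D lam) + (1 - 2 * rD D) * ln D))
    with ((qD D - 1) * rD D * ln (rho0 D lam) + - ln D) by (rewrite Eq1; field; lra).
  rewrite exp_plus, exp_Ropp, exp_ln by lra.
  replace (exp ((qD D - 1) * rD D * ln (rho0 D lam)) * / D * D)
    with (exp ((qD D - 1) * rD D * ln (rho0 D lam))) by (field; lra).
  apply (Rlt_le_trans _ (exp 0)); [apply exp_increasing | rewrite exp_0; lra].
  assert (ln (rho0 D lam) < 0) by (rewrite <- ln_1; apply ln_increasing; lra).
  assert (0 < qD D - 1) by (rewrite Eq1; apply Rinv_0_lt_compat; lra).
  assert (P : 0 < (qD D - 1) * rD D) by (apply Rmult_lt_0_compat; lra).
  pose proof (Rmult_lt_compat_l _ _ _ P H). lra.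
Qed.

(* If [D <= 1] any [D > 1] close enough to [1] will do, since [lc D -> +oo] as [D -> 1]. *)
Lemma exists_D_above lam Dl : 0 < lam -> Rbar_lt (Finite lam) (lambda_c (Finite Dl)) ->
  exists D, 1 < D /\ lam < lc D /\ Dl <= D.
Proof.
  intros Hl H. destruct (Rle_dec Dl 1) as [Hle|Hgt].
  - set (e := / (2 * lam + 1)). assert (He : 0 < e) by (apply Rinv_0_lt_compat; lra).
    exists (1 + e). split; [lra|]. split; [|lra].
    unfold lc. replace (1 + e - 1) with e by ring.
    assert (1 <= exp ((1 + e) * a0 (1 + e))).
    { apply (Rle_trans _ (exp 0)); [rewrite exp_0; lra | apply exp_le].
      pose proof (a0_pos (1 + e)). apply Rmult_le_pos; lra. }
    unfold Rdiv, e. rewrite Rinv_inv. fold e. nra.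
  - exists Dl. split; [lra|]. split; [|lra].
    simpl in H. destruct (Rle_dec Dl 1); [lra|]. simpl in H. rewrite lc_eq by lra. auto.
Qed.

Lemma growth_parameters d lam : 0 < lam -> Rbar_lt (Finite lam) (lambda_c (conn_const d)) ->
  exists D D2 C0, 1 < D /\ lam < lc D /\ gam D lam * D2 < 1 /\ 0 < D2 /\ 1 <= C0 /\
    forall m, Nlev d m <= C0 * D2 ^ m.
Proof.
  intros Hl H. unfold conn_const in H.
  set (u := fun l => root_l (Nlev d l) l) in *.
  destruct (ex_LimSup_seq u) as [ls Hls].
  rewrite (is_LimSup_seq_unique u ls Hls) in H.
  destruct ls as [Dl| |]; [| simpl in H; lra |].
  2:{ exfalso. destruct (Hls 0) as [N HN]. specialize (HN N (le_n N)).
      pose proof (root_l_nonneg (Nlev d N) N). unfold u in HN. lra. }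
  destruct (exists_D_above lam Dl Hl H) as [D [HD1 [HD2 HD3]]].
  set (r1 := gam D lam * D).
  assert (Hr1 : 0 < r1 < 1).
  { unfold r1. split; [apply Rmult_lt_0_compat; [apply gam_pos | lra] | apply gam_mul_lt1; lra]. }
  set (D2 := D * (1 + / r1) / 2).
  assert (HD2' : D < D2).
  { unfold D2. assert (1 < / r1) by (rewrite <- Rinv_1; apply Rinv_lt_contravar; lra). nra. }
  assert (Hg : gam D lam * D2 < 1).
  { unfold D2. unfold r1 in *. pose proof (gam_pos D lam).
    replace (gam D lam * (D * (1 + / (gam D lam * D)) / 2)) with ((gam D lam * D + 1) / 2)
      by (field; split; lra). lra. }
  assert (Heps : 0 < D2 - Dl) by lra.
  destruct (Hls (mkposreal (D2 - Dl) Heps)) as [_ [K0 HK0]]. simpl in HK0.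
  destruct (Nlev_le_geometric d D2 K0) as [C0 [HC0 HN]]; [lra | intros m Hm; specialize (HK0 m Hm); unfold u in HK0; lra |].
  exists D, D2, C0. repeat split; auto; lra.
Qed.
Lemma p_unocc_fixed d lam sigma n v b :
  sigma v = Some b -> p_unocc d lam sigma n v = if b then 0 else 1.
Proof. intro H. destruct n; simpl; [unfold p_unocc_leaf|]; rewrite H; destruct b; reflexivity. Qed.

Lemma Rratio_root_fixed d lam L sigma tau b : 0 < lam ->
  boundary_ok d L sigma -> boundary_ok d L tau -> sigma [] = Some b -> tau [] = Some b ->
  Rratio d lam L sigma = Rratio d lam L tau.
Proof.
  intros Hl Hs Ht Hsb Htb.
  rewrite !Rratio_p_unocc, (p_unocc_fixed d lam sigma L [] b), (p_unocc_fixed d lam tau L [] b) by auto.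
  reflexivity.
Qed.

Lemma Rratio_free d lam L sigma : 0 < lam -> boundary_ok d L sigma -> sigma [] = None ->
  Rratio d lam L sigma = ratio_free d lam sigma L [].
Proof.
  intros Hl Hb Hs. rewrite Rratio_p_unocc, p_unocc_free by auto.
  pose proof (ratio_free_range d lam sigma L [] Hl). field. lra.
Qed.

(* A root fixed occupied gives [p = 1] and the junk value [R = 1 / 0]. *)
Lemma Rratio_bound d lam L sigma : 0 < lam -> boundary_ok d L sigma ->
  Rabs (Rratio d lam L sigma) <= lam + Rabs (/ 0).
Proof.
  intros Hl Hb. pose proof (Rabs_pos (/ 0)).
  destruct (sigma []) as [b|] eqn:Hs.
  - rewrite Rratio_p_unocc, (p_unocc_fixed d lam sigma L [] b) by auto.
    destruct b; unfold Rdiv.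
    + replace (1 - (1 - 0)) with 0 by ring. rewrite Rminus_0_r, Rmult_1_l. lra.
    + rewrite Rminus_diag, Rmult_0_l, Rabs_R0. lra.
  - rewrite Rratio_free by auto. pose proof (ratio_free_range d lam sigma L [] Hl).
    rewrite Rabs_right; lra.
Qed.

Lemma ratio_free_sinh_msg d lam sigma n v : 0 < lam ->
  ratio_free d lam sigma n v = sinh (msg d lam sigma n v) ^ 2.
Proof.
  intro Hl. unfold msg. rewrite sinh_arcsinh. pose proof (ratio_free_range d lam sigma n v Hl).
  simpl. rewrite Rmult_1_r, sqrt_sqrt; lra.
Qed.

Lemma sinh_lipschitz a b M : 0 <= a <= M -> 0 <= b <= M ->
  Rabs (sinh a - sinh b) <= exp M * Rabs (a - b).
Proof.
  intros Ha Hb.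
  assert (Hd : forall x, is_derive sinh x (cosh x)) by (intro x; apply is_derive_Reals, derivable_pt_lim_sinh).
  destruct (MVT_gen sinh b a cosh) as [c [Hc E]].
  - intros; apply Hd.
  - intros y _. apply continuity_pt_filterlim. apply (ex_derive_continuous sinh y). eexists; apply Hd.
  - rewrite E, Rabs_mult. apply Rmult_le_compat_r; [apply Rabs_pos|].
    assert (0 <= c <= M).
    { destruct (Rle_dec a b).
      - rewrite Rmin_right, Rmax_left in Hc by lra. lra.
      - rewrite Rmin_left, Rmax_right in Hc by lra. lra. }
    pose proof (cosh_pos c). rewrite Rabs_right by lra. unfold cosh.
    assert (exp (- c) <= exp c) by (apply exp_le; lra).
    assert (exp c <= exp M) by (apply exp_le; lra). lra.
Qed.

Lemma Rratio_free_diff_le d lam L sigma tau : 0 < lam ->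
  boundary_ok d L sigma -> boundary_ok d L tau -> sigma [] = None -> tau [] = None ->
  Rabs (Rratio d lam L sigma - Rratio d lam L tau)
  <= 2 * sqrt lam * exp (arcsinh (sqrt lam)) * Rabs (msg d lam sigma L [] - msg d lam tau L []).
Proof.
  intros Hl Hs Ht Hsr Htr.
  rewrite !Rratio_free, !ratio_free_sinh_msg by auto.
  set (a := msg d lam sigma L []). set (b := msg d lam tau L []).
  assert (Sbound : forall tt : bcond, 0 <= sinh (msg d lam tt L []) <= sqrt lam).
  { intro tt. unfold msg. rewrite sinh_arcsinh. pose proof (ratio_free_range d lam tt L [] Hl).
    split; [apply sqrt_pos | apply sqrt_le_1; lra]. }
  pose proof (Sbound sigma) as Sa. pose proof (Sbound tau) as Sb. fold a in Sa. fold b in Sb.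
  replace (sinh a ^ 2 - sinh b ^ 2) with ((sinh a - sinh b) * (sinh a + sinh b)) by ring.
  rewrite Rabs_mult, (Rabs_right (sinh a + sinh b)) by lra.
  pose proof (sinh_lipschitz a b (arcsinh (sqrt lam)) (msg_range d lam sigma L [] Hl) (msg_range d lam tau L [] Hl)).
  pose proof (exp_pos (arcsinh (sqrt lam))). pose proof (Rabs_pos (a - b)). pose proof (Rabs_pos (sinh a - sinh b)).
  apply (Rle_trans _ (exp (arcsinh (sqrt lam)) * Rabs (a - b) * (2 * sqrt lam))); [|right; ring].
  apply Rmult_le_compat; lra.
Qed.

(* Summing the contraction over the [Nlev d m <= C0 * D2 ^ m] vertices at depth [m], with
   [gam D lam * D2 < 1], and undoing the [qD D]-th power. *)
Lemma msg_root_decay d lam : 0 < lam -> Rbar_lt (Finite lam) (lambda_c (conn_const d)) ->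
  exists K c, 0 <= K /\ 0 < c /\
    forall (L m : nat) (sigma tau : bcond),
      (forall w, (length w <= m)%nat -> sigma w = tau w) -> sigma [] = None ->
      Rabs (msg d lam sigma L [] - msg d lam tau L []) <= K * exp (- c * INR m).
Proof.
  intros Hl Hlc.
  destruct (growth_parameters d lam Hl Hlc) as [D [D2 [C0 [HD [HlD [Hg [HD2 [HC0 HN]]]]]]]].
  destruct (pD_qD_conjugate D HD) as [_ [Hq _]].
  set (q := qD D) in *. set (g := gam D lam) in *.
  assert (HPM : 0 < rpow (arcsinh (sqrt lam)) q)
    by (rewrite rpow_pos by (apply arcsinh_pos, sqrt_lt_R0; auto); apply exp_pos).
  set (PM := rpow (arcsinh (sqrt lam)) q) in *.
  assert (Hgp : 0 < g) by apply gam_pos.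
  assert (HgD : 0 < g * D2) by (apply Rmult_lt_0_compat; lra).
  exists (exp (ln (C0 * PM) / q)), (- ln (g * D2) / q).
  split; [left; apply exp_pos|]. split.
  { assert (ln (g * D2) < 0) by (rewrite <- ln_1; apply ln_increasing; auto).
    apply Rdiv_lt_0_compat; lra. }
  intros L m sigma tau Hag Hroot.
  pose proof (msg_diff_rpow_bound D lam d sigma tau m HD (conj Hl (Rlt_le _ _ HlD)) Hag m L [])
    as HT.
  assert (HB : rpow (Rabs (msg d lam sigma L [] - msg d lam tau L [])) q <= (g * D2) ^ m * (C0 * PM)).
  { eapply Rle_trans; [apply HT; auto|]. change (Nfrom d (length []) m) with (Nlev d m).
    fold g q. fold PM.
    rewrite Rpow_mult_distr. pose proof (HN m). pose proof (pow_lt g m Hgp).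
    replace (g ^ m * D2 ^ m * (C0 * PM)) with (g ^ m * (C0 * D2 ^ m) * PM) by ring.
    apply Rmult_le_compat_r; [lra|]. apply Rmult_le_compat_l; lra. }
  eapply Rle_trans; [apply (rpow_le_inv _ q ((g * D2) ^ m * (C0 * PM)) (Rabs_pos _)); [lra | | exact HB]|].
  { apply Rmult_lt_0_compat; [apply pow_lt; auto | nra]. }
  rewrite <- exp_plus. apply exp_le.
  rewrite ln_mult, <- Rpower_pow by (try apply pow_lt; nra). unfold Rpower. rewrite ln_exp.
  right. field. lra.
Qed.

Theorem theorem5p1 (d : nat -> nat) (lam : R) :
  0 < lam ->
  Rbar_lt (Finite lam) (lambda_c (conn_const d)) ->
  exists C c : R, 0 < C /\ 0 < c /\
    forall (L l : nat) (sigma tau : bcond),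
      boundary_ok d L sigma -> boundary_ok d L tau ->
      (forall v : list nat, (length v < l)%nat -> sigma v = tau v) ->
      Rabs (Rratio d lam L sigma - Rratio d lam L tau) <= C * exp (- c * INR l).
Proof.
  intros Hl Hlc. destruct (msg_root_decay d lam Hl Hlc) as [K [c [HK [Hc Hdecay]]]].
  set (Klip := 2 * sqrt lam * exp (arcsinh (sqrt lam))).
  assert (HKlip : 0 <= Klip) by (pose proof (sqrt_pos lam); pose proof (exp_pos (arcsinh (sqrt lam))); unfold Klip; nra).
  set (B := 2 * (lam + Rabs (/ 0))). assert (HB : 0 <= B) by (pose proof (Rabs_pos (/ 0)); unfold B; lra).
  exists (B + Klip * K * exp c + 1), c.
  assert (Hce : 0 <= Klip * K * exp c) by (pose proof (exp_pos c); apply Rmult_le_pos; [nra | lra]).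
  split; [lra|]. split; [exact Hc|].
  intros L l sigma tau Hs Ht Hag. pose proof (exp_pos (- c * INR l)) as Hel.
  destruct l as [|m].
  - assert (Rabs (Rratio d lam L sigma - Rratio d lam L tau) <= B).
    { unfold Rminus. eapply Rle_trans; [apply Rabs_triang|]. rewrite Rabs_Ropp.
      pose proof (Rratio_bound d lam L sigma Hl Hs). pose proof (Rratio_bound d lam L tau Hl Ht). unfold B. lra. }
    simpl INR. rewrite Rmult_0_r, exp_0. lra.
  - assert (Hroot : sigma [] = tau []) by (apply Hag; simpl; lia).
    destruct (sigma []) as [b|] eqn:Hsr.
    + rewrite (Rratio_root_fixed d lam L sigma tau b), Rminus_diag, Rabs_R0 by auto. nra.
    + eapply Rle_trans; [apply Rratio_free_diff_le; auto|]. fold Klip.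
      eapply Rle_trans; [apply Rmult_le_compat_l; [auto | apply (Hdecay L m); auto; intros; apply Hag; lia]|].
      replace (Klip * (K * exp (- c * INR m))) with (Klip * K * exp c * exp (- c * INR (S m)))
        by (rewrite Rmult_assoc, <- exp_plus, S_INR; replace (c + - c * (INR m + 1)) with (- c * INR m) by ring; ring).
      nra.
Qed.
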